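(* Let $L\ne\{0,1\}$ be a sharp C-lattice domain in which every element is a join of principal elements. Then for every maximal element $m$ of $L$, the localization $L_m$ is isomorphic to $\mathbb{Z}_-$ or to $\mathbb{R}_1$, and $L$ is a one-dimensional Prüfer lattice (every compact element is principal, and every nonzero prime element is maximal).
   Context: A multiplicative lattice is a complete lattice $(L,\le)$ with bottom $0$ and top $1$ which is also a commutative monoid with identity $1$ such that $a(\bigvee_\alpha b_\alpha)=\bigvee_\alpha(ab_\alpha)$ for all $a,b_\alpha\in L$. For $x,y\in L$, $(y:x)=\bigvee\{a\in L: ax\le y\}$. An element $c$ is compact if $c\le\bigvee S$ implies $c\le\bigvee T$ for some finite $T\subseteq S$. A C-lattice is a multiplicative lattice in which $1$ is compact, the product of two compact elements is compact, and every element is a join of compact elements; $L^*$ denotes its compact elements. A proper element $p\ne1$ is prime if $xy\le p$ implies $x\le p$ or $y\le p$; maximal elements are maximal in $L\setminus\{1\}$; $L$ is a domain if $0$ is prime. An element $x$ is principal if $y\wedge zx=((y:x)\wedge z)x$ and $y\vee(z:x)=((yx\vee z):x)$ for all $y,z\in L$. $L$ is sharp if whenever $a_1a_2\le b$ with $a_1,a_2,b\in L$, there exist $b_1,b_2\in L$ with $a_i\le b_i$ ($i=1,2$) and $b=b_1b_2$. For $p$ prime and $x\in L$, $x_p=\bigvee\{a\in L^*: as\le x \text{ for some } s\in L^*,\ s\not\le p\}$, and $L_p=\{x_p:x\in L\}$ is a lattice with multiplication $(x,y)\mapsto(xy)_p$ and the induced order. $\mathbb{Z}_-$ is the set of integers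 $\le0$ together with $-\infty$, with the usual order and addition as multiplication. $\mathbb{R}_1$ is the set of all intervals $(r,\infty]$ and $[r,\infty]$ with $r\ge0$ real, together with $\{\infty\}$, ordered by inclusion with interval addition as multiplication (isomorphic to the ideal lattice of a valuation domain with value group $\mathbb{R}$). *)

From Stdlib Require Import Reals ZArith List.
From Coquelicot Require Import Rbar.
Set Implicit Arguments.

Record mlattice := MLattice {
  car :> Type;
  le : car -> car -> Prop;
  sup : (car -> Prop) -> car;
  mul : car -> car -> car;
  one : car;
  le_refl : forall x, le x x;
  le_trans : forall x y z, le x y -> le y z -> le x z;
  le_antisym : forall x y, le x y -> le y x -> x = y;
  sup_ub : forall (S : car -> Prop) x, S x -> le x (sup S);
  sup_least : forall (S : car -> Prop) y, (forall x, S x -> le x y) -> le (sup S) y;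
  le_one : forall x, le x one;
  mulA : forall x y z, mul x (mul y z) = mul (mul x y) z;
  mulC : forall x y, mul x y = mul y x;
  mul1 : forall x, mul one x = x;
  mul_sup : forall a (S : car -> Prop),
      mul a (sup S) = sup (fun y => exists x, S x /\ y = mul a x)
}.

Arguments le {m}.
Arguments sup {m}.
Arguments mul {m}.
Arguments one {m}.

Section Defs.
Variable L : mlattice.

Definition zero : L := sup (fun _ => False).
Definition join (a b : L) : L := sup (fun x => x = a \/ x = b).
Definition meet (a b : L) : L := sup (fun x => le x a /\ le x b).
Definition colon (y x : L) : L := sup (fun a => le (mul a x) y).

Definition lcompact (c : L) : Prop :=
  forall S : L -> Prop, le c (sup S) ->
    exists T : list L, (forall t, In t T -> S t) /\ le c (sup (fun t => In t T)).

Definition C_lattice : Prop :=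
  lcompact one /\
  (forall a b : L, lcompact a -> lcompact b -> lcompact (mul a b)) /\
  (forall x : L, exists S : L -> Prop, (forall c, S c -> lcompact c) /\ x = sup S).

Definition prime (p : L) : Prop :=
  p <> one /\ forall x y : L, le (mul x y) p -> le x p \/ le y p.

Definition maximal (m : L) : Prop :=
  m <> one /\ forall x : L, le m x -> x <> one -> x = m.

Definition domain : Prop := prime zero.

Definition principal (x : L) : Prop :=
  forall y z : L,
    meet y (mul z x) = mul (meet (colon y x) z) x /\
    join y (colon z x) = colon (join (mul y x) z) x.

Definition sharp : Prop :=
  forall a1 a2 b : L, le (mul a1 a2) b ->
    exists b1 b2, le a1 b1 /\ le a2 b2 /\ b = mul b1 b2.

Definition loc (p x : L) : L :=
  sup (fun a : L => lcompact a /\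
        exists s : L, lcompact s /\ ~ le s p /\ le (mul a s) x).

(** L_p is isomorphic to the multiplicative lattice given by the subset
    [inT] of [T], with order [leT] and multiplication [mulT]: an order
    isomorphism (onto [inT]) from L_p = {x_p : x in L} (induced order)
    carrying the product (x,y) |-> (xy)_p to [mulT]. *)
Definition loc_iso (p : L) (T : Type) (inT : T -> Prop)
    (leT : T -> T -> Prop) (mulT : T -> T -> T) : Prop :=
  exists f : L -> T,
    (forall x, inT (f (loc p x))) /\
    (forall t, inT t -> exists x, f (loc p x) = t) /\
    (forall x y : L, leT (f (loc p x)) (f (loc p y)) <-> le (loc p x) (loc p y)) /\
    (forall x y : L, f (loc p (mul (loc p x) (loc p y)))
                 = mulT (f (loc p x)) (f (loc p y))).
End Defs.

(** * The lattice Z_- : integers <= 0 together with -oo (encoded as None). *)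
Definition Zm_in (t : option Z) : Prop :=
  match t with Some z => (z <= 0)%Z | None => True end.
Definition Zm_le (s t : option Z) : Prop :=
  match s, t with
  | None, _ => True
  | Some _, None => False
  | Some a, Some b => (a <= b)%Z
  end.
Definition Zm_mul (s t : option Z) : option Z :=
  match s, t with
  | Some a, Some b => Some (a + b)%Z
  | _, _ => None
  end.

(** * The lattice R_1 : subsets of [0, oo] of the form (r,oo], [r,oo] (r >= 0)
    or {oo}, ordered by inclusion, with interval addition. *)
Definition R1_in (A : Rbar -> Prop) : Prop :=
  (exists r : R, (0 <= r)%R /\ A = (fun x => Rbar_lt (Finite r) x)) \/
  (exists r : R, (0 <= r)%R /\ A = (fun x => Rbar_le (Finite r) x)) \/
  A = (fun x => x = p_infty).
Definition R1_le (A B : Rbar -> Prop) : Prop := forall x, A x -> B x.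
Definition R1_mul (A B : Rbar -> Prop) : Rbar -> Prop :=
  fun z => exists a b, A a /\ B b /\ z = Rbar_plus a b.

(* If [u], [w] are principal and [(u : w) <= u], a sharp
   factorization of [join u (w ** w) >= (join u w) ** (join u w)] forces [join u w = 1];
   from this, a sharp factorization of [x] through [join x y] makes joins of principal
   elements principal, so compact elements (finite joins of principal ones) are principal.

   At a maximal [m], two nonzero principal elements become comparable, since their
   cofactors in their join are comaximal and one of them avoids [m]. A sharp
   factorization of the meet of the local powers of a principal [y <= m] shows that no
   nonzero principal element lies below all of them: the localization is Archimedean.
   Hence [v(a) = sup {k/n : a^n <= e^k locally}], for a fixed nonzero principal
   [e <= m], is an additive order-reversing embedding of the local principal elements
   into the nonnegative reals. If some principal element of [m] is locally largest it
   is a uniformizer and [L_m] is [Z_-]; otherwise the values are dense, a last sharp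
   factorization shows that every [r >= 0] is a value, and [L_m] is [R_1]. The
   Archimedean property also forbids a nonzero prime strictly below a maximal element. *)

From Stdlib Require Import Reals ZArith List.
From Coquelicot Require Import Rbar.
From Stdlib Require Import Lia Lra Classical ClassicalEpsilon FunctionalExtensionality
  PropExtensionality.

Notation "x <== y" := (le x y) (at level 70).
Notation "x ** y" := (mul x y) (at level 40, left associativity).

Lemma nat_last_true (P : nat -> Prop) N : P 0%nat -> ~ P N -> exists k, P k /\ ~ P (S k).
Proof.
  intros H0 HN; induction N; [contradiction |].
  destruct (classic (P N)); [exists N | apply IHN]; auto.
Qed.

Lemma nat_least (P : nat -> Prop) :
  (exists k, P k) -> exists k, P k /\ forall j, P j -> (k <= j)%nat.
Proof.
  intros H;
    destruct (Wf_nat.dec_inh_nat_subset_has_unique_least_element P (fun n => classic (P n)) H)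
    as [k [Hk _]]; eauto.
Qed.

Section RealFacts.
Local Open Scope R_scope.

Lemma Rdiv_le_cross a b c d : 0 < b -> 0 < d -> a * d <= c * b -> a / b <= c / d.
Proof.
  intros Hb Hd H.
  replace (a / b) with (a * d * / (b * d)) by (field; lra).
  replace (c / d) with (c * b * / (b * d)) by (field; lra).
  apply Rmult_le_compat_r; auto; left; apply Rinv_0_lt_compat; nra.
Qed.

Lemma Rabs_le_div_nat_eq_0 c d :
  (forall n : nat, (1 <= n)%nat -> Rabs d <= c / INR n) -> d = 0.
Proof.
  intros H; destruct (Req_dec d 0) as [| Hd]; auto; exfalso.
  assert (Hpos : 0 < Rabs d) by (apply Rabs_pos_lt; auto).
  assert (Hc : 0 < c) by (specialize (H 1%nat (le_n 1)); simpl in H; lra).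
  destruct (archimed_cor1 (Rabs d / c)) as [N [HN1 HN2]]; [apply Rdiv_lt_0_compat; auto |].
  specialize (H N HN2).
  assert (c * / INR N < Rabs d).
  { replace (Rabs d) with (c * (Rabs d / c)) by (field; lra).
    apply Rmult_lt_compat_l; auto. }
  unfold Rdiv in H; lra.
Qed.

Lemma glb_exists (E : R -> Prop) lb : (exists x, E x) -> (forall x, E x -> lb <= x) ->
  exists g, (forall x, E x -> g <= x) /\ (forall b, (forall x, E x -> b <= x) -> b <= g).
Proof.
  intros [x0 Hx0] Hb.
  destruct (completeness (fun y => E (- y))) as [g [Hg1 Hg2]].
  - exists (- lb); intros y Hy; specialize (Hb _ Hy); lra.
  - exists (- x0); rewrite Ropp_involutive; auto.
  - exists (- g); split.
    + intros x Hx; assert (- x <= g) by (apply Hg1; rewrite Ropp_involutive; auto); lra.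
    + intros b Hbb; assert (g <= - b) by (apply Hg2; intros y Hy; specialize (Hbb _ Hy); lra); lra.
Qed.
End RealFacts.

Definition principally_generated (L : mlattice) : Prop :=
  forall x : L, exists S : L -> Prop, (forall a, S a -> principal L a) /\ x = sup S.

Section MultiplicativeLattice.
Context {L : mlattice}.

Arguments le_refl {m}.
Arguments le_trans {m} [x y z].
Arguments le_antisym {m}.
Arguments sup_ub {m} [S].
Arguments sup_least {m} [S].
Arguments le_one {m}.
Arguments mulA {m}.
Arguments mulC {m}.
Arguments mul1 {m}.
Arguments mul_sup {m}.
Arguments join {L}.
Arguments meet {L}.
Arguments colon {L}.
Arguments loc {L}.
Arguments lcompact {L}.
Arguments prime {L}.
Arguments maximal {L}.
Arguments principal {L}.

Local Notation bot := (zero L).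

Hypothesis Hdom : domain L.
Hypothesis HC : C_lattice L.
Hypothesis Hsh : sharp L.
Hypothesis HPG : principally_generated L.

Implicit Types a b c d e m p q r s t u v w x y z : L.

Lemma zero_le x : bot <== x.
Proof. apply sup_least; intros ? []. Qed.
Lemma le_zero_eq x : x <== bot -> x = bot.
Proof. intros; apply le_antisym; auto using zero_le. Qed.
Lemma one_le_eq x : one <== x -> x = one.
Proof. intros; apply le_antisym; auto using le_one. Qed.

Lemma join_ub_l a b : a <== join a b. Proof. apply sup_ub; auto. Qed.
Lemma join_ub_r a b : b <== join a b. Proof. apply sup_ub; auto. Qed.
Lemma join_least a b c : a <== c -> b <== c -> join a b <== c.
Proof. intros; apply sup_least; intros x [-> | ->]; auto. Qed.
Lemma join_mono a b c d : a <== c -> b <== d -> join a b <== join c d.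
Proof.
  intros; apply join_least; eapply le_trans; eauto using join_ub_l, join_ub_r.
Qed.
Lemma join_comm a b : join a b = join b a.
Proof. apply le_antisym; apply join_least; auto using join_ub_l, join_ub_r. Qed.
Lemma join_le_eq a b : a <== b -> join a b = b.
Proof.
  intros; apply le_antisym; [apply join_least|]; auto using le_refl, join_ub_r.
Qed.
Lemma join_zero_l a : join bot a = a.
Proof. apply join_le_eq, zero_le. Qed.
Lemma join_zero_r a : join a bot = a.
Proof. rewrite join_comm; apply join_zero_l. Qed.

Lemma meet_lb_l a b : meet a b <== a. Proof. apply sup_least; intros x []; auto. Qed.
Lemma meet_lb_r a b : meet a b <== b. Proof. apply sup_least; intros x []; auto. Qed.
Lemma meet_greatest a b c : c <== a -> c <== b -> c <== meet a b.
Proof. intros; apply sup_ub; auto. Qed.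
Lemma meet_le_eq a b : a <== b -> meet a b = a.
Proof. intros; apply le_antisym; auto using meet_lb_l, meet_greatest, le_refl. Qed.
Lemma meet_one_r a : meet a one = a.
Proof. apply meet_le_eq, le_one. Qed.

Lemma mul_one_r x : x ** one = x.
Proof. rewrite mulC; apply mul1. Qed.
Lemma mulAC a b c : a ** b ** c = a ** c ** b.
Proof. rewrite <- !mulA, (mulC b c); auto. Qed.
Lemma mul_sup_least a (S : L -> Prop) z :
  (forall x, S x -> a ** x <== z) -> a ** sup S <== z.
Proof. intros H; rewrite mul_sup; apply sup_least; intros y [x [Hx ->]]; auto. Qed.
Lemma mul_mono_r a b c : a <== b -> c ** a <== c ** b.
Proof.
  intros H; rewrite <- (join_le_eq a b H); unfold join; rewrite mul_sup.
  apply sup_ub; exists a; auto.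
Qed.
Lemma mul_mono_l a b c : a <== b -> a ** c <== b ** c.
Proof. intros; rewrite (mulC a), (mulC b); apply mul_mono_r; auto. Qed.
Lemma mul_mono a b c d : a <== b -> c <== d -> a ** c <== b ** d.
Proof. intros; eapply le_trans; [apply mul_mono_l; eauto | apply mul_mono_r; auto]. Qed.
Lemma mul_le_l a b : a ** b <== a.
Proof. rewrite <- (mul_one_r a) at 2; apply mul_mono_r, le_one. Qed.
Lemma mul_le_r a b : a ** b <== b.
Proof. rewrite mulC; apply mul_le_l. Qed.
Lemma mul_zero_r a : a ** bot = bot.
Proof. apply le_zero_eq, mul_le_r. Qed.
Lemma mul_zero_l a : bot ** a = bot.
Proof. rewrite mulC; apply mul_zero_r. Qed.
Lemma mul_join_distr_l c a b : c ** join a b = join (c ** a) (c ** b).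
Proof.
  apply le_antisym.
  - apply mul_sup_least; intros x [-> | ->]; auto using join_ub_l, join_ub_r.
  - apply join_least; apply mul_mono_r; auto using join_ub_l, join_ub_r.
Qed.
Lemma mul_join_distr_r a b c : join a b ** c = join (a ** c) (b ** c).
Proof. rewrite mulC, mul_join_distr_l, (mulC c a), (mulC c b); auto. Qed.

Lemma le_colon_iff y x a : a <== colon y x <-> a ** x <== y.
Proof.
  split; intros H.
  - eapply le_trans; [apply mul_mono_l, H |].
    rewrite mulC; apply mul_sup_least; intros b Hb; rewrite mulC; auto.
  - apply sup_ub; auto.
Qed.
Lemma le_colon_intro y x a : a ** x <== y -> a <== colon y x.
Proof. apply le_colon_iff. Qed.
Lemma colon_mul_le y x : colon y x ** x <== y.
Proof. apply le_colon_iff, le_refl. Qed.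
Lemma colon_eq_one y x : x <== y -> colon y x = one.
Proof. intros; apply one_le_eq, le_colon_intro; rewrite mul1; auto. Qed.
Lemma colon_colon z x y : colon (colon z x) y = colon z (x ** y).
Proof.
  apply le_antisym; apply le_colon_intro.
  - rewrite (mulC x y), mulA; apply le_colon_iff, colon_mul_le.
  - apply le_colon_intro; rewrite <- mulA, (mulC y x); apply colon_mul_le.
Qed.
Lemma colon_mono y y' x : y <== y' -> colon y x <== colon y' x.
Proof. intros; apply le_colon_intro; eapply le_trans; [apply colon_mul_le | auto]. Qed.

Definition fin_join (T : list L) : L := sup (fun t => In t T).

Lemma fin_join_nil : fin_join nil = bot.
Proof. apply le_antisym; apply sup_least; intros ? []. Qed.
Lemma fin_join_cons a T : fin_join (a :: T) = join a (fin_join T).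
Proof.
  apply le_antisym.
  - apply sup_least; intros t [<- | Ht]; [apply join_ub_l |].
    eapply le_trans; [| apply join_ub_r]; apply sup_ub; auto.
  - apply join_least; [apply sup_ub; left; auto |].
    apply sup_least; intros t Ht; apply sup_ub; right; auto.
Qed.

Lemma compact_zero : lcompact bot.
Proof. intros S _; exists nil; split; [intros _ [] | apply zero_le]. Qed.
Lemma compact_join a b : lcompact a -> lcompact b -> lcompact (join a b).
Proof.
  intros Ha Hb S HS.
  destruct (Ha S) as [T1 [H1 H1']]; [eapply le_trans; [apply join_ub_l | eauto] |].
  destruct (Hb S) as [T2 [H2 H2']]; [eapply le_trans; [apply join_ub_r | eauto] |].
  exists (T1 ++ T2); split.
  - intros t Ht; apply in_app_or in Ht; destruct Ht; auto.
  - apply join_least; eapply le_trans; eauto;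
      apply sup_least; intros t Ht; apply sup_ub, in_or_app; auto.
Qed.
Lemma compact_fin_join T : (forall t, In t T -> lcompact t) -> lcompact (fin_join T).
Proof.
  induction T as [|a T IH]; intros H.
  - rewrite fin_join_nil; apply compact_zero.
  - rewrite fin_join_cons; apply compact_join; simpl in *; auto.
Qed.

Fixpoint lpow x (n : nat) : L := match n with O => one | S n => x ** lpow x n end.

Lemma lpow_add x n k : lpow x (n + k) = lpow x n ** lpow x k.
Proof. induction n; simpl; [rewrite mul1 | rewrite IHn, mulA]; auto. Qed.
Lemma lpow_mul_l x y n : lpow (x ** y) n = lpow x n ** lpow y n.
Proof.
  induction n; simpl; [rewrite mul1; auto |].
  rewrite IHn, <- !mulA; f_equal; rewrite !mulA, (mulC y); auto.
Qed.
Lemma lpow_antimono x n k : (n <= k)%nat -> lpow x k <== lpow x n.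
Proof. intros; replace k with (n + (k - n))%nat by lia; rewrite lpow_add; apply mul_le_l. Qed.
Lemma lpow_lpow x n k : lpow (lpow x n) k = lpow x (n * k).
Proof.
  induction k; simpl; [rewrite Nat.mul_0_r; auto |].
  rewrite Nat.mul_succ_r, Nat.add_comm, lpow_add, IHk; auto.
Qed.

(** * Principal elements *)

Lemma zero_neq_one : bot <> one.
Proof. apply Hdom. Qed.
Lemma mul_le_zero a b : a ** b <== bot -> a = bot \/ b = bot.
Proof.
  intros H; destruct (proj2 Hdom a b H); [left | right]; apply le_zero_eq; auto.
Qed.
Lemma mul_neq_zero a b : a <> bot -> b <> bot -> a ** b <> bot.
Proof. intros Ha Hb E; destruct (mul_le_zero a b); auto; rewrite E; apply le_refl. Qed.
Lemma lpow_neq_zero a n : a <> bot -> lpow a n <> bot.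
Proof. induction n; simpl; auto using mul_neq_zero, zero_neq_one. Qed.
Lemma colon_zero x : x <> bot -> colon bot x = bot.
Proof. intros Hx; destruct (mul_le_zero _ x (colon_mul_le _ _)); tauto. Qed.

Lemma principal_meet x y z : principal x -> meet y (z ** x) = meet (colon y x) z ** x.
Proof. intros H; apply H. Qed.
Lemma principal_join_colon x y z :
  principal x -> join y (colon z x) = colon (join (y ** x) z) x.
Proof. intros H; apply H. Qed.

Lemma le_principal_eq x y : principal x -> y <== x -> y = colon y x ** x.
Proof.
  intros H Hy; generalize (principal_meet x y one H).
  rewrite mul1, meet_le_eq, meet_one_r; auto.
Qed.
Lemma colon_mul_cancel x y : principal x -> x <> bot -> colon (y ** x) x = y.
Proof.
  intros H Hx; generalize (principal_join_colon x y bot H).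
  rewrite colon_zero, !join_zero_r; auto.
Qed.
Lemma principal_mul_cancel_le x y z :
  principal x -> x <> bot -> y ** x <== z ** x -> y <== z.
Proof. intros H Hx Hy; rewrite <- (colon_mul_cancel x z); auto; apply le_colon_intro; auto. Qed.
Lemma principal_mul_cancel x y z : principal x -> x <> bot -> y ** x = z ** x -> y = z.
Proof.
  intros H Hx E; apply le_antisym; eapply principal_mul_cancel_le; eauto;
    rewrite E; apply le_refl.
Qed.

Lemma principal_one : principal (@one L).
Proof.
  assert (E : forall w, colon w one = w).
  { intros w; apply le_antisym.
    - rewrite <- (mul_one_r (colon w one)); apply colon_mul_le.
    - apply le_colon_intro; rewrite mul_one_r; apply le_refl. }
  intros y z; rewrite !mul_one_r, !E; auto.
Qed.
Lemma principal_zero : principal bot.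
Proof.
  intros y z; rewrite !mul_zero_r; split.
  - apply le_zero_eq, meet_lb_r.
  - rewrite !colon_eq_one by apply zero_le; apply one_le_eq, join_ub_r.
Qed.
Lemma principal_mul x y : principal x -> principal y -> principal (x ** y).
Proof.
  intros Hx Hy w z; split.
  - rewrite mulA, (principal_meet y), (principal_meet x), colon_colon, (mulC y x), mulA
      by auto; auto.
  - rewrite <- (colon_colon z x y), (principal_join_colon y), (principal_join_colon x),
      colon_colon, (mulC x y), mulA by auto; auto.
Qed.
Lemma principal_lpow x n : principal x -> principal (lpow x n).
Proof. induction n; simpl; auto using principal_one, principal_mul. Qed.

Section Factor.
Variables p b c : L.
Hypotheses (Hp : principal p) (Hp0 : p <> bot) (Hbc : b ** c = p).

Lemma factor_cancel_le_l u u' : b ** u <== b ** u' -> u <== u'.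
Proof.
  intros H; apply (principal_mul_cancel_le p); auto.
  rewrite (mulC u), (mulC u'), <- Hbc, (mulC b c), <- !mulA; apply mul_mono_r; auto.
Qed.
Lemma factor_cancel_le_r u u' : c ** u <== c ** u' -> u <== u'.
Proof.
  intros H; apply (principal_mul_cancel_le p); auto.
  rewrite (mulC u), (mulC u'), <- Hbc, <- !mulA; apply mul_mono_r; auto.
Qed.

Lemma le_factor_eq v : v <== b -> v = colon v b ** b.
Proof.
  intros Hv.
  assert (Ev : v ** c = colon (v ** c) p ** p)
    by (apply le_principal_eq; auto; rewrite <- Hbc; apply mul_mono_l; auto).
  set (s := colon (v ** c) p) in Ev.
  assert (E : c ** v = c ** (s ** b)) by (rewrite (mulC c v), Ev, <- Hbc, mulA, mulC; auto).
  assert (Ev' : v = s ** b)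
    by (apply le_antisym; apply factor_cancel_le_r; rewrite E; apply le_refl).
  apply le_antisym; [| apply colon_mul_le].
  rewrite Ev' at 1; apply mul_mono_l, le_colon_intro; rewrite <- Ev'; apply le_refl.
Qed.

Lemma principal_factor : principal b.
Proof.
  intros y w; split; apply le_antisym.
  - set (v := meet y (w ** b)).
    assert (Hv : v <== b) by (eapply le_trans; [apply meet_lb_r | apply mul_le_r]).
    rewrite (le_factor_eq v Hv) at 1; apply mul_mono_l, meet_greatest.
    + apply colon_mono, meet_lb_l.
    + apply factor_cancel_le_l; rewrite (mulC b), (mulC b w).
      eapply le_trans; [apply colon_mul_le | apply meet_lb_r].
  - apply meet_greatest.
    + eapply le_trans; [apply mul_mono_l, meet_lb_l | apply colon_mul_le].
    + apply mul_mono_l, meet_lb_r.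
  - apply join_least; [apply le_colon_intro, join_ub_l | apply colon_mono, join_ub_r].
  - set (t := colon (join (y ** b) w) b).
    assert (Ht : t ** p <== join (y ** p) (w ** c)).
    { rewrite <- Hbc, !mulA, <- mul_join_distr_r; apply mul_mono_l, colon_mul_le. }
    apply le_colon_intro in Ht; rewrite <- principal_join_colon in Ht by auto.
    eapply le_trans; [apply Ht |]; apply join_mono; [apply le_refl |].
    apply le_colon_intro, factor_cancel_le_r.
    rewrite !(mulC c), <- mulA, Hbc; apply colon_mul_le.
Qed.

Lemma factor_neq_zero : b <> bot.
Proof. intros E; apply Hp0; rewrite <- Hbc, E, mul_zero_l; auto. Qed.
End Factor.

Lemma lpow_le a b n : a <== b -> (1 <= n)%nat -> lpow a n <== b.
Proof. intros H Hn; destruct n; [lia | simpl; eapply le_trans; [apply mul_le_l | auto]]. Qed.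

Definition nzprincipal x := principal x /\ x <> bot.

Lemma nzprincipal_one : nzprincipal one.
Proof. split; [apply principal_one | intro E; apply zero_neq_one; auto]. Qed.
Lemma nzprincipal_mul x y : nzprincipal x -> nzprincipal y -> nzprincipal (x ** y).
Proof. intros [] []; split; [apply principal_mul | apply mul_neq_zero]; auto. Qed.
Lemma nzprincipal_lpow x n : nzprincipal x -> nzprincipal (lpow x n).
Proof. intros []; split; [apply principal_lpow | apply lpow_neq_zero]; auto. Qed.

(** * The Prüfer property *)

Lemma fin_join_mul_le (S : L -> Prop) x T :
  (forall t, In t T -> exists c, S c /\ t ** x <== c) ->
  exists C, (forall c, In c C -> S c) /\ fin_join T ** x <== fin_join C.
Proof.
  induction T as [|t T IH]; intros H.
  - exists nil; split; [intros _ [] | rewrite fin_join_nil, mul_zero_l; apply zero_le].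
  - destruct IH as [C [HCS HTC]]; [intros; apply H; right; auto |].
    destruct (H t) as [c [Hc Htc]]; [left; auto |].
    exists (c :: C); split; [intros c' [<- | ]; auto |].
    rewrite !fin_join_cons, mul_join_distr_r; apply join_mono; auto.
Qed.

Lemma compact_one : lcompact (@one L).
Proof. apply HC. Qed.
Lemma compact_mul a b : lcompact a -> lcompact b -> lcompact (a ** b).
Proof. apply HC. Qed.
Lemma compact_generators x : exists S, (forall c, S c -> lcompact c) /\ x = sup S.
Proof. apply HC. Qed.

Lemma principal_compact x : principal x -> lcompact x.
Proof.
  intros Hx; destruct (classic (x = bot)) as [-> | Hx0]; [apply compact_zero |].
  destruct (compact_generators x) as [S [HS Ex]].
  assert (HSx : forall c, S c -> c <== x) by (intros; rewrite Ex; apply sup_ub; auto).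
  set (Ts := fun a => exists c, S c /\ a ** x <== c).
  assert (E : sup Ts ** x = one ** x).
  { rewrite mul1; apply le_antisym.
    - rewrite mulC; apply mul_sup_least; intros a [c [Hc Hac]].
      rewrite mulC; eapply le_trans; eauto.
    - rewrite Ex at 1; apply sup_least; intros c Hc.
      rewrite (le_principal_eq x c Hx (HSx c Hc)).
      apply mul_mono_l, sup_ub; exists c; split; auto; apply colon_mul_le. }
  apply principal_mul_cancel in E; auto.
  destruct (compact_one Ts) as [T [HT HT1]]; [rewrite E; apply le_refl |].
  destruct (fin_join_mul_le S x T) as [C [HC1 HC2]]; [intros; apply HT; auto |].
  replace x with (fin_join C).
  - apply compact_fin_join; intros; apply HS; auto.
  - apply le_antisym; [apply sup_least; auto |].
    eapply le_trans; [| apply HC2]; rewrite <- (mul1 x) at 1; apply mul_mono_l; auto.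
Qed.

Lemma compact_eq_fin_join_principal c : lcompact c ->
  exists T, (forall t, In t T -> principal t) /\ c = fin_join T.
Proof.
  intros Hc; destruct (HPG c) as [S [HS Ec]].
  destruct (Hc S) as [T [HT HcT]]; [rewrite <- Ec; apply le_refl |].
  exists T; split; auto.
  apply le_antisym; auto; apply sup_least; intros t Ht; rewrite Ec; apply sup_ub; auto.
Qed.

Lemma sharp_le_square a b w : a ** a <== b -> w <== a -> colon b w <== a -> b <== a ** a.
Proof.
  intros Hab Hwa Hbw; destruct (Hsh a a b Hab) as [b1 [b2 [H1 [H2 Eb]]]].
  assert (Hb1 : b1 <== a).
  { eapply le_trans; [| apply Hbw]; apply le_colon_intro; rewrite Eb.
    apply mul_mono_r; eapply le_trans; eauto. }
  assert (Hb2 : b2 <== a).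
  { eapply le_trans; [| apply Hbw]; apply le_colon_intro; rewrite Eb, mulC.
    apply mul_mono_l; eapply le_trans; eauto. }
  rewrite Eb; apply mul_mono; auto.
Qed.

(* Sharpness forces [join u (w ** w) = c ** c] for [c = join u w]; hence
   [u <= join (c ** u) (w ** w)], and cancelling [u] leaves [one <= c]. *)
Lemma join_eq_one_of_colon_le u w : principal u -> principal w -> u <> bot ->
  colon u w <== u -> join u w = one.
Proof.
  intros Hu Hw Hu0 Huw.
  set (c := join u w); set (B := join u (w ** w)).
  assert (Hwc : w <== c) by apply join_ub_r.
  assert (HcB : c ** c <== B).
  { unfold c at 2; rewrite mul_join_distr_l; apply join_least.
    - eapply le_trans; [apply mul_le_r | apply join_ub_l].
    - unfold c; rewrite mul_join_distr_r; apply join_mono; [apply mul_le_l | apply le_refl]. }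
  assert (HBw : colon B w <== c).
  { unfold B; rewrite join_comm, <- principal_join_colon, join_comm by auto.
    apply join_mono; auto using le_refl. }
  assert (Hcc : c ** c <== join (c ** u) (w ** w)).
  { unfold c at 2; rewrite mul_join_distr_l; apply join_least; [apply join_ub_l |].
    unfold c; rewrite mul_join_distr_r; apply join_mono; [| apply le_refl].
    rewrite mulC; apply mul_mono_l; auto. }
  assert (H1 : one <== join c (colon (w ** w) u)).
  { rewrite principal_join_colon by auto; apply le_colon_intro; rewrite mul1.
    eapply le_trans; [apply join_ub_l | ]; fold B.
    eapply le_trans; [apply (sharp_le_square c B w) | ]; auto. }
  assert (Ht : colon (w ** w) u <== w).
  { apply (principal_mul_cancel_le u); auto.
    eapply le_trans; [apply meet_greatest with (a := u) (b := w) |].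
    - apply mul_le_r.
    - eapply le_trans; [apply colon_mul_le | apply mul_le_l].
    - rewrite <- (mul1 w) at 1; rewrite principal_meet, meet_one_r, (mulC w u) by auto.
      apply mul_mono_l; auto. }
  apply one_le_eq; eapply le_trans; [apply H1 |].
  apply join_least; [apply le_refl | eapply le_trans; eauto].
Qed.

(* Sharpness gives [x = b1 ** b2] with [join x y <= b1] and [colon x (join x y) <= b2];
   then [join x y = b1 ** join b2 w] for [y = w ** b1], and [b2], [w] are comaximal. *)
Lemma principal_join x y : principal x -> principal y -> principal (join x y).
Proof.
  intros Hx Hy.
  destruct (classic (x = bot)) as [-> | Hx0]; [rewrite join_zero_l; auto |].
  destruct (classic (y = bot)) as [-> | Hy0]; [rewrite join_zero_r; auto |].
  set (a := join x y).
  assert (Hax : a ** colon x a <== x) by (rewrite mulC; apply colon_mul_le).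
  destruct (Hsh _ _ _ Hax) as [b1 [b2 [Hab1 [Hb2 Ex]]]].
  assert (Ex' : b2 ** b1 = x) by (rewrite mulC; auto).
  assert (Hb1 : principal b1) by (apply (principal_factor x b1 b2); auto).
  assert (Hyb1 : y <== b1) by (eapply le_trans; [apply join_ub_r | apply Hab1]).
  set (w := colon y b1).
  assert (Ey : y = w ** b1) by (apply le_principal_eq; auto).
  assert (Ea : a = b1 ** join b2 w)
    by (rewrite mul_join_distr_l, <- Ex, (mulC b1 w), <- Ey; auto).
  assert (Hcomax : join b2 w = one).
  { apply join_eq_one_of_colon_le.
    - apply (principal_factor x b2 b1); auto.
    - apply (principal_factor y w b1); auto.
    - apply (factor_neq_zero x b2 b1); auto.
    - eapply le_trans; [| apply Hb2]; apply le_colon_intro.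
      rewrite Ea, (mulC b1), mulA, Ex, (mulC b1 b2); apply mul_mono_l.
      rewrite mul_join_distr_l; apply join_least; [apply mul_le_r | apply colon_mul_le]. }
  rewrite Ea, Hcomax, mul_one_r; auto.
Qed.

Lemma le_of_nzprincipal_le x y : (forall b, nzprincipal b -> b <== x -> b <== y) -> x <== y.
Proof.
  intros H; destruct (HPG x) as [S [HS Ex]]; rewrite Ex; apply sup_least; intros b Hb.
  destruct (classic (b = bot)) as [-> | Hb0]; [apply zero_le |].
  apply H; [split; auto | rewrite Ex; apply sup_ub; auto].
Qed.

Lemma compact_principal c : lcompact c -> principal c.
Proof.
  intros Hc; destruct (compact_eq_fin_join_principal c Hc) as [T [HT ->]]; clear Hc.
  induction T as [|t T IH]; [rewrite fin_join_nil; apply principal_zero |].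
  rewrite fin_join_cons; apply principal_join;
    [apply HT; left | apply IH; intros; apply HT; right]; auto.
Qed.

Lemma join_colon_join_eq_one x y : principal x -> principal y -> x <> bot ->
  join (colon x (join x y)) (colon y (join x y)) = one.
Proof.
  intros Hx Hy Hx0.
  assert (Hb : principal (join x y)) by (apply principal_join; auto).
  assert (Hb0 : join x y <> bot)
    by (intros E; apply Hx0, le_zero_eq; rewrite <- E; apply join_ub_l).
  apply (principal_mul_cancel (join x y)); auto.
  rewrite mul_join_distr_r, <- !le_principal_eq, mul1; auto using join_ub_l, join_ub_r.
Qed.

(** * Maximal elements *)

Inductive tower (x : L) (g : L -> L) : L -> Prop :=
| tower_base : tower x g x
| tower_step y : tower x g y -> tower x g (g y)
| tower_sup (C : L -> Prop) : (forall c, C c -> tower x g c) -> (exists c, C c) ->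
    tower x g (sup C).

Section Tower.
Variables (x : L) (g : L -> L).
Hypothesis Hg : forall y, y <== g y.
Local Notation T := (tower x g).

Lemma tower_ge y : T y -> x <== y.
Proof.
  induction 1 as [| y _ IH | C _ IH [c Hc]]; [apply le_refl | eapply le_trans; eauto |].
  eapply le_trans; [apply IH; eauto | apply sup_ub; auto].
Qed.

Definition tower_extreme c := forall y, T y -> y <== c -> y <> c -> g y <== c.

Lemma tower_extreme_split c : T c -> tower_extreme c -> forall y, T y -> y <== c \/ g c <== y.
Proof.
  intros Tc Ec y Ty; induction Ty as [| y Ty IH | C HCT IH Hne].
  - left; apply tower_ge; auto.
  - destruct IH as [H | H].
    + destruct (classic (y = c)) as [-> | Hyc]; [right; apply le_refl | left; apply Ec; auto].
    + right; eapply le_trans; eauto.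
  - destruct (classic (exists c', C c' /\ g c <== c')) as [[c' [Hc' Hgc]] | Hno].
    + right; eapply le_trans; [apply Hgc | apply sup_ub; auto].
    + left; apply sup_least; intros c' Hc'.
      destruct (IH c' Hc'); auto; exfalso; eauto.
Qed.

Lemma tower_all_extreme c : T c -> tower_extreme c.
Proof.
  induction 1 as [| c Tc IH | C HCT IH Hne]; intros y Ty Hyc Hne'.
  - exfalso; apply Hne', le_antisym, tower_ge; auto.
  - destruct (tower_extreme_split c Tc IH y Ty) as [H | H].
    + destruct (classic (y = c)) as [-> | Hyc']; [apply le_refl |].
      eapply le_trans; [apply IH | apply Hg]; auto.
    + exfalso; apply Hne', le_antisym; auto.
  - destruct (classic (forall c, C c -> g c <== y)) as [Hall | Hex].
    + exfalso; apply Hne', le_antisym; auto.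
      apply sup_least; intros c Hc; eapply le_trans; [apply Hg | auto].
    + apply not_all_ex_not in Hex; destruct Hex as [c Hex].
      apply imply_to_and in Hex; destruct Hex as [Hc Hgc].
      destruct (tower_extreme_split c (HCT c Hc) (IH c Hc) y Ty) as [Hyc2 |]; [| contradiction].
      destruct (classic (y = c)) as [-> | Hyc3].
      * destruct (classic (exists c', C c' /\ g c <== c')) as [[c' [Hc' Hgc']] | Hno].
        -- eapply le_trans; [apply Hgc' | apply sup_ub; auto].
        -- exfalso; apply Hne', le_antisym; auto; apply sup_least; intros c' Hc'.
           destruct (tower_extreme_split c (HCT c Hc) (IH c Hc) c' (HCT c' Hc')); auto.
           exfalso; eauto.
      * eapply le_trans; [apply (IH c Hc); auto | apply sup_ub; auto].
Qed.

Lemma tower_chain a b : T a -> T b -> a <== b \/ b <== a.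
Proof.
  intros Ta Tb; destruct (tower_extreme_split b Tb (tower_all_extreme b Tb) a Ta); auto.
  right; eapply le_trans; [apply Hg | eauto].
Qed.

Lemma tower_fin_join_le (C : L -> Prop) l : (forall c, C c -> T c) ->
  (forall t, In t l -> C t) -> l <> nil -> exists c, C c /\ fin_join l <== c.
Proof.
  intros HCT; induction l as [| a l IH]; intros Hl Hne; [contradiction |].
  assert (Ha : C a) by (apply Hl; left; auto).
  rewrite fin_join_cons; destruct l as [| b l'].
  - exists a; rewrite fin_join_nil, join_zero_r; split; auto using le_refl.
  - destruct IH as [c [Hc Hlc]]; [intros; apply Hl; right; auto | discriminate |].
    destruct (tower_chain a c (HCT a Ha) (HCT c Hc)) as [H | H].
    + exists c; split; auto; apply join_least; auto.
    + exists a; split; auto; apply join_least; [apply le_refl | eapply le_trans; eauto].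
Qed.
End Tower.

(* Bourbaki-Witt: if [x] had no maximal element above it, the tower generated
   from [x] by a choice of strictly larger proper elements would stay proper
   (compactness of [one] at limits), yet its join is a fixed point. *)
Lemma exists_maximal_ge x : x <> one -> exists m, maximal m /\ x <== m.
Proof.
  intros Hx; apply NNPP; intros Hno.
  set (P := fun y => x <== y /\ y <> one).
  set (g := fun y => epsilon (inhabits y) (fun z => y <== z /\ (P y -> z <> one /\ z <> y))).
  assert (Hgs : forall y, y <== g y /\ (P y -> g y <> one /\ g y <> y)).
  { intros y; apply epsilon_spec.
    destruct (classic (P y)) as [Py | Py]; [| exists y; split; [apply le_refl | tauto]].
    apply NNPP; intros Hn; apply Hno; exists y; split; [| apply Py].
    split; [apply Py |]; intros z Hz Hz1.
    apply NNPP; intros Hzy; apply Hn; exists z; auto. }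
  assert (Hg : forall y, y <== g y) by (intros; apply Hgs).
  assert (Hproper : forall y, tower x g y -> y <> one).
  { induction 1 as [| y Ty IH | C HCT IH Hne]; auto.
    - apply (proj2 (Hgs y)); split; auto; apply tower_ge with (g := g); auto.
    - intros E; destruct (compact_one C) as [l [Hl Hl1]]; [rewrite E; apply le_refl |].
      destruct l as [| a l].
      + change (one <== fin_join nil) in Hl1; rewrite fin_join_nil in Hl1.
        apply Hx, one_le_eq; eapply le_trans; [apply Hl1 | apply zero_le].
      + destruct (tower_fin_join_le x g Hg C (a :: l) HCT Hl) as [c [Hc Hlc]]; [discriminate |].
        apply (IH c Hc), one_le_eq; eapply le_trans; eauto. }
  set (s := sup (tower x g)).
  assert (Ts : tower x g s) by (apply tower_sup; eauto using tower_base).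
  assert (Es : g s = s) by (apply le_antisym; [apply sup_ub, tower_step | apply Hg]; auto).
  apply (proj2 (proj2 (Hgs s) (conj (tower_ge x g Hg s Ts) (Hproper s Ts)))); auto.
Qed.

Lemma maximal_prime m : maximal m -> prime m.
Proof.
  intros [Hm1 Hm]; split; auto; intros x y Hxy.
  destruct (classic (x <== m)) as [| Hx]; [left; auto | right].
  assert (E : join m x = one).
  { apply NNPP; intros Hne; apply Hx; rewrite <- (Hm _ (join_ub_l m x) Hne); apply join_ub_r. }
  rewrite <- (mul_one_r y), <- E, mul_join_distr_l; apply join_least; [apply mul_le_r |].
  rewrite mulC; auto.
Qed.

(** * Localization at a prime *)

Section Localization.
Variable m : L.
Hypothesis Hm : prime m.
Local Notation lc := (loc m).

Definition unit_at s := lcompact s /\ ~ s <== m.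

Lemma unit_at_one : unit_at one.
Proof. split; [apply compact_one | intro H; apply (proj1 Hm), one_le_eq; auto]. Qed.
Lemma unit_at_mul s t : unit_at s -> unit_at t -> unit_at (s ** t).
Proof.
  intros [Hs Hs'] [Ht Ht']; split; [apply compact_mul; auto |].
  intros H; destruct (proj2 Hm s t H); auto.
Qed.
Lemma unit_at_principal s : principal s -> ~ s <== m -> unit_at s.
Proof. intros; split; auto; apply principal_compact; auto. Qed.

Lemma le_loc_intro a s x : unit_at s -> a ** s <== x -> a <== lc x.
Proof.
  intros Hs H; destruct (compact_generators a) as [S [HS Ea]]; rewrite Ea.
  apply sup_least; intros c Hc; apply sup_ub; split; auto.
  exists s; split; [apply Hs | split; [apply Hs |]].
  eapply le_trans; [| apply H]; apply mul_mono_l; rewrite Ea; apply sup_ub; auto.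
Qed.
Lemma le_loc x : x <== lc x.
Proof. apply (le_loc_intro x one); [apply unit_at_one | rewrite mul_one_r; apply le_refl]. Qed.
Lemma loc_mono x y : x <== y -> lc x <== lc y.
Proof.
  intros H; apply sup_least; intros a [Ha [s [Hs1 [Hs2 Has]]]].
  apply (le_loc_intro a s); [split | eapply le_trans]; eauto.
Qed.

Lemma compact_le_loc c x : lcompact c -> c <== lc x -> exists s, unit_at s /\ c ** s <== x.
Proof.
  intros Hc H; destruct (Hc _ H) as [T [HT HcT]].
  assert (G : exists s, unit_at s /\ fin_join T ** s <== x).
  { clear HcT; induction T as [| t T IH].
    - exists one; split; [apply unit_at_one | rewrite fin_join_nil, mul_zero_l; apply zero_le].
    - destruct IH as [s [Hs HTs]]; [intros; apply HT; right; auto |].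
      destruct (HT t (or_introl eq_refl)) as [_ [s' [Hs1 [Hs2 Hts]]]].
      exists (s ** s'); split; [apply unit_at_mul; [| split]; auto |].
      rewrite fin_join_cons, mul_join_distr_r; apply join_least.
      + rewrite (mulC s s'), mulA; eapply le_trans; [apply mul_le_l | auto].
      + rewrite mulA; eapply le_trans; [apply mul_le_l | auto]. }
  destruct G as [s [Hs HTs]]; exists s; split; auto.
  eapply le_trans; [apply mul_mono_l; eauto | auto].
Qed.

Lemma le_loc_of_mul_unit a s x : unit_at s -> a ** s <== lc x -> a <== lc x.
Proof.
  intros Hs H; destruct (compact_generators a) as [S [HS Ea]]; rewrite Ea.
  apply sup_least; intros c Hc.
  destruct (compact_le_loc (c ** s) x) as [t [Ht Hct]].
  - apply compact_mul; [auto | apply Hs].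
  - eapply le_trans; [| apply H]; apply mul_mono_l; rewrite Ea; apply sup_ub; auto.
  - apply (le_loc_intro c (s ** t)); [apply unit_at_mul | rewrite mulA]; auto.
Qed.

Lemma loc_idem x : lc (lc x) = lc x.
Proof.
  apply le_antisym; [| apply le_loc].
  apply sup_least; intros a [Ha [s [Hs1 [Hs2 H]]]].
  apply (le_loc_of_mul_unit a s); [split |]; auto.
Qed.
Lemma loc_le_loc a x : a <== lc x -> lc a <== lc x.
Proof. intros; rewrite <- (loc_idem x); apply loc_mono; auto. Qed.

Lemma loc_mul_le x y : lc x ** lc y <== lc (x ** y).
Proof.
  apply mul_sup_least; intros b [Hb [t [Ht1 [Ht2 Hbt]]]].
  rewrite mulC; apply mul_sup_least; intros a [Ha [s [Hs1 [Hs2 Has]]]].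
  apply (le_loc_intro _ (s ** t)); [apply unit_at_mul; split; auto |].
  rewrite mulA, <- (mulA b a s), (mulC b (a ** s)), <- mulA; apply mul_mono; auto.
Qed.
Lemma loc_mul_loc x y : lc (lc x ** lc y) = lc (x ** y).
Proof.
  apply le_antisym; [apply loc_le_loc, loc_mul_le |].
  apply loc_mono, mul_mono; apply le_loc.
Qed.
Lemma loc_mul_mono x y x' y' :
  lc x <== lc x' -> lc y <== lc y' -> lc (x ** y) <== lc (x' ** y').
Proof.
  intros; rewrite <- (loc_mul_loc x y), <- (loc_mul_loc x' y'); apply loc_mono, mul_mono; auto.
Qed.
Lemma loc_mul_congr x y x' y' : lc x = lc x' -> lc y = lc y' -> lc (x ** y) = lc (x' ** y').
Proof. intros E1 E2; rewrite <- (loc_mul_loc x y), <- (loc_mul_loc x' y'), E1, E2; auto. Qed.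
Lemma loc_lpow_mono x y n : lc x <== lc y -> lc (lpow x n) <== lc (lpow y n).
Proof. intros H; induction n; simpl; [apply le_refl | apply loc_mul_mono; auto]. Qed.
Lemma loc_lpow_congr x y n : lc x = lc y -> lc (lpow x n) = lc (lpow y n).
Proof. intros H; apply le_antisym; apply loc_lpow_mono; rewrite H; apply le_refl. Qed.

Lemma loc_one : lc one = one.
Proof. apply one_le_eq, le_loc. Qed.
Lemma loc_unit_at s : unit_at s -> lc s = one.
Proof. intros Hs; apply one_le_eq, (le_loc_intro one s); auto; rewrite mul1; apply le_refl. Qed.
Lemma loc_mul_unit_at x s : unit_at s -> lc (x ** s) = lc x.
Proof.
  intros Hs; apply le_antisym; [apply loc_mono, mul_le_l |].
  apply loc_le_loc, (le_loc_intro x s); auto using le_refl.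
Qed.
Lemma loc_le_prime x : x <== m -> lc x <== m.
Proof.
  intros H; apply sup_least; intros a [Ha [s [Hs1 [Hs2 Has]]]].
  destruct (proj2 Hm a s); [eapply le_trans; eauto | auto | contradiction].
Qed.
Lemma loc_zero : lc bot = bot.
Proof.
  apply le_zero_eq, sup_least; intros a [Ha [s [Hs1 [Hs2 Has]]]].
  destruct (mul_le_zero a s Has) as [-> | ->]; [apply le_refl | exfalso; apply Hs2, zero_le].
Qed.
Lemma loc_neq_zero x : x <> bot -> lc x <> bot.
Proof. intros H E; apply H, le_zero_eq; rewrite <- E; apply le_loc. Qed.
Lemma loc_join_le x y z : lc x <== lc z -> lc y <== lc z -> lc (join x y) <== lc z.
Proof.
  intros; apply loc_le_loc, join_least; eapply le_trans; eauto using le_loc.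
Qed.

Lemma le_loc_cancel x y c :
  principal c -> c <> bot -> lc (x ** c) <== lc (y ** c) -> x <== lc y.
Proof.
  intros Hc Hc0 H; destruct (compact_generators x) as [S [HS Ex]]; rewrite Ex.
  apply sup_least; intros a Ha.
  destruct (compact_le_loc (a ** c) (y ** c)) as [s [Hs Has]].
  - apply compact_mul; auto using principal_compact.
  - eapply le_trans; [| apply H]; eapply le_trans; [| apply le_loc].
    apply mul_mono_l; rewrite Ex; apply sup_ub; auto.
  - apply (le_loc_intro a s); auto; apply (principal_mul_cancel_le c); auto.
    rewrite mulAC; auto.
Qed.
Lemma loc_mul_cancel_le x y c :
  principal c -> c <> bot -> lc (x ** c) <== lc (y ** c) -> lc x <== lc y.
Proof. intros; apply loc_le_loc; eapply le_loc_cancel; eauto. Qed.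

Lemma le_prime_iff_loc_neq_one a : principal a -> (a <== m <-> lc a <> one).
Proof.
  intros Ha; split.
  - intros H E; apply (proj1 Hm), one_le_eq; rewrite <- E; apply loc_le_prime; auto.
  - intros H; apply NNPP; intros Hn; apply H, loc_unit_at, unit_at_principal; auto.
Qed.

Lemma loc_divides_total a b : nzprincipal a -> nzprincipal b ->
  (exists r, nzprincipal r /\ lc (r ** b) = lc a) \/
  (exists r, nzprincipal r /\ lc (r ** a) = lc b).
Proof.
  intros [Ha Ha0] [Hb Hb0].
  pose proof (join_colon_join_eq_one a b Ha Hb Ha0) as E1.
  set (j := join a b) in *; set (u := colon a j) in *; set (w := colon b j) in *.
  assert (Hj : principal j) by (apply principal_join; auto).
  assert (Ea : a = u ** j) by (apply le_principal_eq, join_ub_l; auto).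
  assert (Eb : b = w ** j) by (apply le_principal_eq, join_ub_r; auto).
  assert (Hu : nzprincipal u)
    by (split; [apply (principal_factor a u j) | apply (factor_neq_zero a u j)]; auto).
  assert (Hw : nzprincipal w)
    by (split; [apply (principal_factor b w j) | apply (factor_neq_zero b w j)]; auto).
  destruct (classic (w <== m)) as [Hwm | Hwm].
  - assert (Hum : ~ u <== m)
      by (intros Hum; apply (proj1 Hm), one_le_eq; rewrite <- E1; apply join_least; auto).
    right; exists w; split; auto.
    rewrite Ea, mulA, mulAC, <- Eb; apply loc_mul_unit_at, (unit_at_principal u (proj1 Hu) Hum).
  - left; exists u; split; auto.
    rewrite Eb, mulA, mulAC, <- Ea; apply loc_mul_unit_at, (unit_at_principal w (proj1 Hw) Hwm).
Qed.

Lemma loc_le_total a b : nzprincipal a -> nzprincipal b -> lc a <== lc b \/ lc b <== lc a.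
Proof.
  intros Ha Hb; destruct (loc_divides_total a b Ha Hb) as [[r [_ E]] | [r [_ E]]];
    [left | right]; rewrite <- E; apply loc_mono, mul_le_r.
Qed.
Lemma loc_le_divides a b : nzprincipal a -> nzprincipal b -> lc a <== lc b ->
  exists r, nzprincipal r /\ lc (r ** b) = lc a.
Proof.
  intros Ha Hb H; destruct (loc_divides_total a b Ha Hb) as [| [r [_ E]]]; auto.
  exists one; split; [apply nzprincipal_one |].
  rewrite mul1; apply le_antisym; auto; rewrite <- E; apply loc_mono, mul_le_r.
Qed.
Lemma loc_lt_divides a b : nzprincipal a -> nzprincipal b -> ~ lc a <== lc b ->
  exists r, nzprincipal r /\ r <== m /\ lc (r ** a) = lc b.
Proof.
  intros Ha Hb H; destruct (loc_le_total a b Ha Hb) as [| Hba]; [contradiction |].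
  destruct (loc_le_divides b a Hb Ha Hba) as [r [Hr Er]].
  exists r; split; [auto | split; [| auto]]; apply NNPP; intros Hrm; apply H.
  rewrite <- Er, mulC, loc_mul_unit_at;
    [apply le_refl | apply (unit_at_principal r (proj1 Hr) Hrm)].
Qed.
Lemma not_loc_le_mul_of_le_prime r a : principal r -> r <== m -> nzprincipal a ->
  ~ lc a <== lc (r ** a).
Proof.
  intros Hr Hrm [Ha Ha0] H; apply (proj1 (le_prime_iff_loc_neq_one r Hr) Hrm), one_le_eq.
  apply (le_loc_cancel one r a); auto; rewrite mul1; auto.
Qed.

Lemma loc_root a b n : nzprincipal a -> nzprincipal b -> (1 <= n)%nat ->
  lc (lpow a n) <== lc (lpow b n) -> lc a <== lc b.
Proof.
  intros Ha Hb Hn H; apply NNPP; intros Hab.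
  destruct (loc_lt_divides a b Ha Hb Hab) as [r [Hr [Hrm Er]]].
  rewrite <- (loc_lpow_congr _ _ n Er), lpow_mul_l in H.
  apply (not_loc_le_mul_of_le_prime (lpow r n) (lpow a n)) in H; auto using nzprincipal_lpow.
  - apply principal_lpow, Hr.
  - apply lpow_le; auto.
Qed.
Lemma loc_lpow_le_lpow a j k : nzprincipal a -> a <== m ->
  lc (lpow a j) <== lc (lpow a k) -> (k <= j)%nat.
Proof.
  intros Ha Ham H; destruct (Nat.le_gt_cases k j) as [| Hjk]; auto; exfalso.
  replace k with (k - j + j)%nat in H by lia; rewrite lpow_add in H.
  apply (not_loc_le_mul_of_le_prime (lpow a (k - j)) (lpow a j)) in H; auto using nzprincipal_lpow.
  - apply principal_lpow, Ha.
  - apply lpow_le; auto; lia.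
Qed.

Lemma loc_fin_join_le_member T : (forall t, In t T -> principal t) ->
  fin_join T = bot \/ exists t, In t T /\ nzprincipal t /\ lc (fin_join T) <== lc t.
Proof.
  induction T as [| a T IH]; intros HT; [left; apply fin_join_nil |].
  rewrite fin_join_cons.
  destruct (classic (a = bot)) as [-> | Ha].
  - rewrite join_zero_l;
      destruct IH as [| [t [Ht Ht']]]; [intros; apply HT; right; auto | left; auto |].
    right; exists t; split; [right |]; auto.
  - assert (HNa : nzprincipal a) by (split; auto; apply HT; left; auto).
    destruct IH as [E | [t [Ht [Ht0 Ht1]]]]; [intros; apply HT; right; auto | |].
    + right; exists a; split; [left | split]; auto; rewrite E, join_zero_r; apply le_refl.
    + destruct (loc_le_total a t HNa Ht0) as [H | H].
      * right; exists t; split; [right | split]; auto; apply loc_join_le; auto.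
      * right; exists a; split; [left | split]; auto.
        apply loc_join_le; [apply le_refl | eapply le_trans; eauto].
Qed.

Lemma loc_compact_le_member c (S : L -> Prop) : lcompact c -> (forall t, S t -> principal t) ->
  c <== sup S -> c = bot \/ exists t, S t /\ nzprincipal t /\ lc c <== lc t.
Proof.
  intros Hc HS H; destruct (Hc S H) as [T [HT HcT]].
  destruct (loc_fin_join_le_member T) as [E | [t [Ht [Ht0 Ht1]]]]; [intros; apply HS, HT; auto | |].
  - left; apply le_zero_eq; rewrite <- E; auto.
  - right; exists t; split; [| split]; auto; eapply le_trans; [apply loc_mono, HcT | auto].
Qed.

Lemma loc_compact_le_mul c b1 b2 : lcompact c -> c <== b1 ** b2 -> c = bot \/
  exists p1 p2, nzprincipal p1 /\ nzprincipal p2 /\ p1 <== b1 /\ p2 <== b2 /\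
    lc c <== lc (p1 ** p2).
Proof.
  intros Hc H; destruct (HPG b1) as [S1 [HS1 E1]], (HPG b2) as [S2 [HS2 E2]].
  set (S := fun t => exists p1 p2, S1 p1 /\ S2 p2 /\ t = p1 ** p2).
  assert (Hb : b1 ** b2 <== sup S).
  { rewrite E1, mulC; apply mul_sup_least; intros p1 Hp1; rewrite E2, mulC.
    apply mul_sup_least; intros p2 Hp2; apply sup_ub; exists p1, p2; auto. }
  destruct (loc_compact_le_member c S Hc) as [| [t [[p1 [p2 [H1 [H2 ->]]]] [[_ Ht0] Ht]]]];
    [intros t [p1 [p2 [H1 [H2 ->]]]]; apply principal_mul; auto | eapply le_trans; eauto | auto |].
  right; exists p1, p2; split; [| split; [| split; [| split]]]; auto.
  - split; auto; intros E; apply Ht0; rewrite E, mul_zero_l; auto.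
  - split; auto; intros E; apply Ht0; rewrite E, mul_zero_r; auto.
  - rewrite E1; apply sup_ub; auto.
  - rewrite E2; apply sup_ub; auto.
Qed.

Lemma nzprincipal_le_loc a z : nzprincipal a -> a <== lc z ->
  exists s, unit_at s /\ lcompact (a ** s) /\ a ** s <> bot /\ a ** s <== z.
Proof.
  intros [Ha Ha0] Haz.
  destruct (compact_le_loc a z (principal_compact a Ha) Haz) as [s [Hs Has]].
  exists s; split; [auto | split; [apply compact_mul, Hs; apply principal_compact; auto | split]];
    auto.
  apply mul_neq_zero; auto; intros E; apply (proj2 Hs); rewrite E; apply zero_le.
Qed.

Lemma nzprincipal_le_loc_member a (S : L -> Prop) : nzprincipal a ->
  (forall t, S t -> principal t) -> a <== lc (sup S) ->
  exists t, S t /\ nzprincipal t /\ lc a <== lc t.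
Proof.
  intros Ha HS Has; destruct (nzprincipal_le_loc a _ Ha Has) as [s [Hs [Hc [Hc0 Hle]]]].
  destruct (loc_compact_le_member _ S Hc HS Hle) as [| [t [Ht [Ht0 Hst]]]]; [contradiction |].
  exists t; split; [| split]; auto; rewrite loc_mul_unit_at in Hst; auto.
Qed.

Lemma nzprincipal_le_loc_mul c b1 b2 : nzprincipal c -> c <== lc (b1 ** b2) ->
  exists p1 p2, nzprincipal p1 /\ nzprincipal p2 /\ p1 <== b1 /\ p2 <== b2 /\
    lc c <== lc (p1 ** p2).
Proof.
  intros Hc Hcb; destruct (nzprincipal_le_loc c _ Hc Hcb) as [s [Hs [Hcs [Hcs0 Hle]]]].
  destruct (loc_compact_le_mul _ b1 b2 Hcs Hle) as [| [p1 [p2 H12]]]; [contradiction |].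
  exists p1, p2; rewrite loc_mul_unit_at in H12; auto.
Qed.

Definition loc_pow_meet y := sup (fun a => forall n, a <== lc (lpow y n)).

(* Sharpness splits [lc x = b1 ** b2] with [loc_pow_meet y <= b1] and
   [colon (lc x) (loc_pow_meet y) <= b2]; the principal factor [p1 <= b1] of [x]
   then generates [loc_pow_meet y] locally. *)
Lemma loc_pow_meet_generator x y : nzprincipal x -> nzprincipal y ->
  (forall n, lc x <== lc (lpow y n)) ->
  exists p, nzprincipal p /\ p <== loc_pow_meet y /\ forall t, t <== loc_pow_meet y -> t <== lc p.
Proof.
  intros Hx Hy Hn; set (P := loc_pow_meet y).
  assert (HP : forall n, P <== lc (lpow y n)) by (intros n; apply sup_least; auto).
  assert (HPC : P ** colon (lc x) P <== lc x) by (rewrite mulC; apply colon_mul_le).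
  destruct (Hsh _ _ _ HPC) as [b1 [b2 [H1 [H2 EC]]]].
  assert (Hb12 : forall u v, u <== b1 -> v <== b2 -> lc (u ** v) <== lc x)
    by (intros; apply loc_le_loc; rewrite EC; apply mul_mono; auto).
  destruct (nzprincipal_le_loc_mul x b1 b2 Hx) as [p1 [p2 [Hp1 [Hp2 [Hpb1 [Hpb2 Hx12]]]]]];
    [rewrite <- EC, loc_idem; apply le_loc |].
  assert (Epp : lc (p1 ** p2) = lc x) by (apply le_antisym; auto).
  exists p1; split; [auto | split].
  - apply sup_ub; intros k.
    destruct (loc_le_divides x (lpow y k) Hx) as [r [Hr Er]];
      [apply nzprincipal_lpow; auto | auto |].
    assert (Hrb2 : r <== b2).
    { eapply le_trans; [| apply H2]; apply le_colon_intro.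
      eapply le_trans; [apply mul_mono_r, (HP k) |].
      rewrite <- Er; eapply le_trans; [apply mul_mono_l, le_loc | apply loc_mul_le]. }
    apply (le_loc_cancel p1 (lpow y k) r); try apply Hr.
    rewrite (mulC (lpow y k)), Er; apply Hb12; auto.
  - intros t Ht; apply (le_loc_cancel t p1 p2); try apply Hp2.
    rewrite Epp; apply Hb12; [eapply le_trans |]; eauto.
Qed.

(* Otherwise [loc_pow_meet y] has a local generator [p = t ** y] with
   [t <= loc_pow_meet y <= lc p], and cancelling [t] makes [y] a unit. *)
Lemma loc_archimedean y x : principal y -> y <== m -> nzprincipal x ->
  exists n, ~ lc x <== lc (lpow y n).
Proof.
  intros Hy Hym Hx; apply NNPP; intros Hno.
  assert (Hn : forall n, lc x <== lc (lpow y n))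
    by (intros n; apply NNPP; intros H; apply Hno; eauto).
  assert (Hy0 : y <> bot).
  { intros E; apply (loc_neq_zero x (proj2 Hx)), le_zero_eq.
    specialize (Hn 1%nat); simpl in Hn; rewrite E, mul_zero_l, loc_zero in Hn; auto. }
  destruct (loc_pow_meet_generator x y Hx (conj Hy Hy0) Hn) as [p [Hp [HpP Hgen]]].
  assert (HP : forall n, loc_pow_meet y <== lc (lpow y n))
    by (intros; apply sup_least; auto).
  assert (Hpy : lc p <== lc y).
  { apply loc_le_loc; eapply le_trans; [apply HpP |].
    eapply le_trans; [apply (HP 1%nat) |]; simpl; rewrite mul_one_r; apply le_refl. }
  destruct (loc_le_divides p y Hp (conj Hy Hy0) Hpy) as [t [Ht Et]].
  assert (HtP : t <== loc_pow_meet y).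
  { apply sup_ub; intros k; apply (le_loc_cancel t (lpow y k) y Hy Hy0).
    rewrite Et, (mulC (lpow y k)); apply loc_le_loc.
    eapply le_trans; [apply HpP | apply (HP (S k))]. }
  apply (proj1 (le_prime_iff_loc_neq_one y Hy) Hym), one_le_eq.
  apply (le_loc_cancel one y t); try apply Ht.
  rewrite mul1, (mulC y), Et; apply loc_le_loc, Hgen; auto.
Qed.

(** * The valuation of the localization *)

Section Valuation.
Local Open Scope R_scope.
Variable e : L.
Hypothesis He : nzprincipal e.
Hypothesis Hem : e <== m.

Definition ratio_le a n k := lc (lpow a n) <== lc (lpow e k).
Definition val_ratios a (r : R) :=
  exists n k, (1 <= n)%nat /\ ratio_le a n k /\ r = INR k / INR n.
(* The valuation of [a] normalised by [val e = 1]; the supremum exists by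
   [ratio_le_bounded]. *)
Definition val a : R := epsilon (inhabits 0) (is_lub (val_ratios a)).

Lemma ratio_le_0 a n : ratio_le a n 0.
Proof. unfold ratio_le; simpl; rewrite loc_one; apply le_one. Qed.

Lemma ratio_le_rescale a n k n' k' : nzprincipal a -> (1 <= n)%nat -> (1 <= n')%nat ->
  ratio_le a n' k' -> (k * n' <= k' * n)%nat -> ratio_le a n k.
Proof.
  intros Ha Hn Hn' HK Hk; apply (loc_lpow_mono _ _ n) in HK; rewrite !lpow_lpow in HK.
  apply (loc_root (lpow a n) (lpow e k) n'); auto using nzprincipal_lpow.
  rewrite !lpow_lpow; eapply le_trans; [| apply loc_mono, lpow_antimono, Hk].
  rewrite Nat.mul_comm; auto.
Qed.

Lemma ratio_le_bounded a : nzprincipal a ->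
  exists N : nat, forall n k, (1 <= n)%nat -> ratio_le a n k -> INR k / INR n <= INR N.
Proof.
  intros Ha; destruct (loc_archimedean e a (proj1 He) Hem Ha) as [N HN]; exists N.
  intros n k Hn HK; destruct (Nat.le_gt_cases (n * N) k) as [Hk | Hk].
  - exfalso; apply HN; pose proof (ratio_le_rescale a 1 N n k Ha (le_n 1) Hn HK) as X.
    unfold ratio_le in X; simpl lpow at 1 in X; rewrite mul_one_r in X; apply X; lia.
  - assert (0 < INR n) by (apply lt_0_INR; lia).
    apply (Rmult_le_reg_r (INR n)); auto; unfold Rdiv.
    rewrite Rmult_assoc, Rinv_l, Rmult_1_r, <- mult_INR by lra; apply le_INR; lia.
Qed.

Lemma val_is_lub a : nzprincipal a -> is_lub (val_ratios a) (val a).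
Proof.
  intros Ha; unfold val; apply epsilon_spec.
  destruct (ratio_le_bounded a Ha) as [N HN].
  destruct (completeness (val_ratios a)) as [r Hr]; [| | exists r; auto].
  - exists (INR N); intros r [n [k [Hn [HK ->]]]]; auto.
  - exists 0, 1%nat, 0%nat; split; [auto | split; [apply ratio_le_0 | simpl; lra]].
Qed.

Lemma ratio_le_val a n k : nzprincipal a -> (1 <= n)%nat -> ratio_le a n k ->
  INR k / INR n <= val a.
Proof. intros Ha Hn HK; apply (val_is_lub a Ha); exists n, k; auto. Qed.

Lemma val_le_ratio a n k : nzprincipal a -> (1 <= n)%nat -> ~ ratio_le a n k ->
  val a <= INR k / INR n.
Proof.
  intros Ha Hn HK; apply (val_is_lub a Ha); intros r [n' [k' [Hn' [HK' ->]]]].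
  apply Rdiv_le_cross; try (apply lt_0_INR; lia).
  rewrite <- !mult_INR; apply le_INR.
  destruct (Nat.le_gt_cases (k' * n) (k * n')) as [| Hlt]; auto.
  exfalso; apply HK, (ratio_le_rescale a n k n' k'); auto; lia.
Qed.

Lemma ratio_le_last a n : nzprincipal a -> exists k, ratio_le a n k /\ ~ ratio_le a n (S k).
Proof.
  intros Ha; destruct (loc_archimedean e (lpow a n) (proj1 He) Hem (nzprincipal_lpow a n Ha))
    as [N HN].
  apply (nat_last_true (ratio_le a n) N); [apply ratio_le_0 | auto].
Qed.

Lemma val_nonneg a : nzprincipal a -> 0 <= val a.
Proof.
  intros Ha; eapply Rle_trans; [| apply (ratio_le_val a 1 0); auto using ratio_le_0].
  simpl; lra.
Qed.

Lemma val_antimono a b : nzprincipal a -> nzprincipal b -> lc a <== lc b -> val b <= val a.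
Proof.
  intros Ha Hb H; apply (val_is_lub b Hb); intros r [n [k [Hn [HK ->]]]].
  apply (ratio_le_val a n k Ha Hn); eapply le_trans; [apply loc_lpow_mono, H | apply HK].
Qed.
Lemma val_congr a b : nzprincipal a -> nzprincipal b -> lc a = lc b -> val a = val b.
Proof. intros Ha Hb E; apply Rle_antisym; apply val_antimono; auto; rewrite E; apply le_refl. Qed.

(* With [k_a], [k_b] maximal such that [a^n <= e^k_a] and [b^n <= e^k_b] locally,
   [(a ** b)^n <= e^(k_a + k_b)] but not [<= e^(k_a + k_b + 2)]; so the three
   values are pinned down up to [2 / n]. *)
Lemma val_mul a b : nzprincipal a -> nzprincipal b -> val (a ** b) = val a + val b.
Proof.
  intros Ha Hb; assert (Hab : nzprincipal (a ** b)) by (apply nzprincipal_mul; auto).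
  enough (Hd : val (a ** b) - (val a + val b) = 0) by lra.
  apply (Rabs_le_div_nat_eq_0 2); intros n Hn.
  destruct (ratio_le_last a n Ha) as [ka [Ka Ka']], (ratio_le_last b n Hb) as [kb [Kb Kb']].
  assert (H1 : ratio_le (a ** b) n (ka + kb))
    by (unfold ratio_le in *; rewrite lpow_mul_l, lpow_add; apply loc_mul_mono; auto).
  assert (H2 : ~ ratio_le (a ** b) n (S (S (ka + kb)))).
  { unfold ratio_le in *; intros H.
    assert (Tb : lc (lpow e (S kb)) <== lc (lpow b n)).
    { destruct (loc_le_total (lpow e (S kb)) (lpow b n)); auto using nzprincipal_lpow.
      contradiction. }
    apply Ka', (loc_mul_cancel_le _ _ (lpow b n));
      [apply principal_lpow, Hb | apply lpow_neq_zero, Hb |].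
    rewrite <- lpow_mul_l; eapply le_trans; [apply H |].
    replace (S (S (ka + kb))) with (S ka + S kb)%nat by lia; rewrite lpow_add.
    apply loc_mul_mono; auto using le_refl. }
  pose proof (ratio_le_val a n ka Ha Hn Ka); pose proof (val_le_ratio a n (S ka) Ha Hn Ka').
  pose proof (ratio_le_val b n kb Hb Hn Kb); pose proof (val_le_ratio b n (S kb) Hb Hn Kb').
  pose proof (ratio_le_val _ n _ Hab Hn H1); pose proof (val_le_ratio _ n _ Hab Hn H2).
  rewrite !S_INR, plus_INR in *; assert (0 < INR n) by (apply lt_0_INR; lia).
  unfold Rdiv in *; apply Rabs_le; split; nra.
Qed.

Lemma val_one : val one = 0.
Proof. pose proof (val_mul one one nzprincipal_one nzprincipal_one); rewrite mul1 in H; lra. Qed.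
Lemma val_lpow a n : nzprincipal a -> val (lpow a n) = INR n * val a.
Proof.
  intros Ha; induction n; simpl lpow; [rewrite val_one; simpl; lra |].
  rewrite val_mul, IHn, S_INR; auto using nzprincipal_lpow; lra.
Qed.
Lemma val_pos a : nzprincipal a -> a <== m -> 0 < val a.
Proof.
  intros Ha Ham; destruct (loc_archimedean a e (proj1 Ha) Ham He) as [N HN].
  destruct N; [exfalso; apply HN; simpl; rewrite loc_one; apply le_one |].
  assert (HK : ratio_le a (S N) 1).
  { destruct (loc_le_total e (lpow a (S N)) He (nzprincipal_lpow _ _ Ha)); [contradiction |].
    unfold ratio_le; simpl lpow at 2; rewrite mul_one_r; auto. }
  eapply Rlt_le_trans; [| apply (ratio_le_val a (S N) 1 Ha); auto; lia].
  assert (0 < INR (S N)) by (apply lt_0_INR; lia).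
  simpl INR at 1; unfold Rdiv; rewrite Rmult_1_l; apply Rinv_0_lt_compat; auto.
Qed.
Lemma val_unit a : nzprincipal a -> ~ a <== m -> val a = 0.
Proof.
  intros Ha Ham; rewrite <- val_one; apply val_congr; auto using nzprincipal_one.
  rewrite loc_one; apply loc_unit_at, unit_at_principal; [apply Ha | auto].
Qed.
Lemma val_lt a b : nzprincipal a -> nzprincipal b -> ~ lc a <== lc b -> val a < val b.
Proof.
  intros Ha Hb H; destruct (loc_lt_divides a b Ha Hb H) as [r [Hr [Hrm Er]]].
  rewrite <- (val_congr _ _ (nzprincipal_mul _ _ Hr Ha) Hb Er), val_mul; auto.
  pose proof (val_pos r Hr Hrm); lra.
Qed.
Lemma loc_le_iff_val_ge a b : nzprincipal a -> nzprincipal b -> (lc a <== lc b <-> val b <= val a).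
Proof.
  intros Ha Hb; split; [apply val_antimono; auto |].
  intros H; apply NNPP; intros Hn; pose proof (val_lt a b Ha Hb Hn); lra.
Qed.

Definition to_R1 z (t : Rbar) : Prop :=
  match t with
  | Finite q => exists a, nzprincipal a /\ a <== z /\ val a <= q
  | p_infty => True
  | m_infty => False
  end.

Lemma to_R1_eq z (B : Rbar -> Prop) : B p_infty -> ~ B m_infty ->
  (forall q : R, to_R1 z q <-> B q) -> to_R1 z = B.
Proof.
  intros Hpinf Hminf Hq; apply functional_extensionality; intros [q | |];
    apply propositional_extensionality; [apply Hq | simpl; tauto | simpl; tauto].
Qed.

Lemma to_R1_in z : R1_in (to_R1 z).
Proof.
  destruct (classic (exists a, nzprincipal a /\ a <== z)) as [[a0 [Ha0 Ha0z]] | Hno].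
  2:{ right; right; apply to_R1_eq; [auto | discriminate |].
      intros q; split; [intros [a [Ha [Haz _]]]; exfalso; eauto | discriminate]. }
  set (V := fun r : R => exists a, nzprincipal a /\ a <== z /\ val a = r).
  destruct (glb_exists V 0) as [g [Hg1 Hg2]];
    [exists (val a0), a0; auto | intros r [a [Ha [_ <-]]]; apply val_nonneg; auto |].
  assert (Hg0 : 0 <= g) by (apply Hg2; intros r [a [Ha [_ <-]]]; apply val_nonneg; auto).
  assert (Hge : forall a, nzprincipal a -> a <== z -> g <= val a)
    by (intros a Ha Haz; apply Hg1; exists a; auto).
  destruct (classic (V g)) as [[a1 [Ha1 [Ha1z Ea1]]] | Hna].
  - right; left; exists g; split; auto; apply to_R1_eq; simpl; auto.
    intros q; split; [intros [a [Ha [Haz Hvq]]]; pose proof (Hge a Ha Haz); lra |].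
    intros Hq; exists a1; split; [| split]; auto; lra.
  - left; exists g; split; auto; apply to_R1_eq; simpl; auto.
    intros q; split.
    + intros [a [Ha [Haz Hvq]]]; pose proof (Hge a Ha Haz).
      destruct (Req_dec (val a) g); [exfalso; apply Hna; exists a; auto | lra].
    + intros Hq; apply NNPP; intros Hno.
      enough (q <= g) by lra.
      apply Hg2; intros r [a [Ha [Haz <-]]]; apply Rnot_lt_le; intros X; apply Hno.
      exists a; split; [| split]; auto; lra.
Qed.

Lemma to_R1_le_iff x y : R1_le (to_R1 (lc x)) (to_R1 (lc y)) <-> lc x <== lc y.
Proof.
  split.
  - intros H; apply le_of_nzprincipal_le; intros b Hb Hbx.
    destruct (H (Finite (val b))) as [a [Ha [Hay Hva]]];
      [exists b; split; [| split]; auto; lra |].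
    eapply le_trans; [apply le_loc |]; eapply le_trans; [| apply loc_le_loc, Hay].
    apply (loc_le_iff_val_ge b a Hb Ha); auto.
  - intros H [q | |]; simpl; auto; intros [a [Ha [Hax Hva]]].
    exists a; split; [| split]; auto; eapply le_trans; eauto.
Qed.

Lemma to_R1_mul x y : to_R1 (lc (lc x ** lc y)) = R1_mul (to_R1 (lc x)) (to_R1 (lc y)).
Proof.
  apply to_R1_eq.
  - exists p_infty, p_infty; simpl; auto.
  - intros [a [b [Ha [Hb Eab]]]]; destruct a, b; simpl in *; try discriminate; contradiction.
  - intros q; split.
    + intros [c [Hc [Hcxy Hvc]]].
      destruct (nzprincipal_le_loc_mul c (lc x) (lc y) Hc Hcxy)
        as [p1 [p2 [Hp1 [Hp2 [Hpx [Hpy H12]]]]]].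
      apply (loc_le_iff_val_ge _ _ Hc (nzprincipal_mul _ _ Hp1 Hp2)) in H12.
      rewrite val_mul in H12; auto.
      exists (Finite (val p1)), (Finite (q - val p1)); simpl; split; [| split].
      * exists p1; split; [| split]; auto; lra.
      * exists p2; split; [| split]; auto; lra.
      * f_equal; lra.
    + intros [[a | |] [[b | |] [Ha [Hb Eab]]]]; simpl in *; try discriminate; try contradiction.
      injection Eab as ->.
      destruct Ha as [a1 [Ha1 [Ha1x Hva1]]], Hb as [b1 [Hb1 [Hb1y Hvb1]]].
      exists (a1 ** b1); split; [apply nzprincipal_mul; auto | split].
      * eapply le_trans; [| apply le_loc]; apply mul_mono; auto.
      * rewrite val_mul; auto; lra.
Qed.

(** * Without a uniformizer, L_m is R_1 *)

Section WithoutUniformizer.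
Hypothesis Hnounif : forall t, nzprincipal t -> t <== m ->
  exists t', nzprincipal t' /\ t' <== m /\ ~ lc t' <== lc t.

Lemma val_halving a : nzprincipal a -> a <== m ->
  exists b, nzprincipal b /\ b <== m /\ val b <= val a / 2.
Proof.
  intros Ha Ham; destruct (Hnounif a Ha Ham) as [t [Ht [Htm Hta]]].
  assert (Hat : lc a <== lc t)
    by (destruct (loc_le_total a t Ha Ht); [auto | contradiction]).
  destruct (loc_le_divides a t Ha Ht Hat) as [r [Hr Er]].
  assert (Ev : val a = val r + val t)
    by (rewrite <- (val_congr _ _ (nzprincipal_mul _ _ Hr Ht) Ha Er), val_mul; auto).
  assert (Hrm : r <== m).
  { apply NNPP; intros Hrm; rewrite (val_unit r Hr Hrm) in Ev.
    pose proof (val_lt t a Ht Ha Hta); lra. }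
  destruct (Rle_lt_dec (val r) (val t)) as [Hrt | Hrt]; [exists r | exists t];
    (split; [auto | split; [auto | lra]]).
Qed.

Lemma val_small (eps : R) : 0 < eps -> exists a, nzprincipal a /\ a <== m /\ val a < eps.
Proof.
  intros Heps; set (V := fun r : R => exists a, nzprincipal a /\ a <== m /\ val a = r).
  destruct (glb_exists V 0) as [g [Hg1 Hg2]];
    [exists (val e), e; auto | intros r [a [Ha [_ <-]]]; apply val_nonneg; auto |].
  assert (Hbelow : forall s : R, g < s -> exists a, nzprincipal a /\ a <== m /\ val a < s).
  { intros s Hs; apply NNPP; intros Hno.
    enough (s <= g) by lra.
    apply Hg2; intros r [a [Ha [Ham <-]]]; apply Rnot_lt_le; intros X; apply Hno; eauto. }
  assert (Hg0 : g <= 0).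
  { apply Rnot_lt_le; intros Hgp.
    destruct (Hbelow (2 * g)) as [a [Ha [Ham Hva]]]; [lra |].
    destruct (val_halving a Ha Ham) as [b [Hb [Hbm Hvb]]].
    assert (g <= val b) by (apply Hg1; exists b; auto); lra. }
  apply Hbelow; lra.
Qed.

Lemma val_dense (r1 r2 : R) : 0 <= r1 -> r1 < r2 -> exists a, nzprincipal a /\ r1 < val a < r2.
Proof.
  intros H0 H12; destruct (val_small (r2 - r1)) as [a [Ha [Ham Hva]]]; [lra |].
  pose proof (val_pos a Ha Ham) as Hd; set (d := val a) in *.
  destruct (INR_unbounded (r1 / d)) as [N HN].
  destruct (nat_last_true (fun k => INR k * d <= r1) N) as [k [Hk1 Hk2]].
  - simpl; lra.
  - intros X; assert (r1 / d * d = r1) by (field; lra); nra.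
  - exists (lpow a (S k)); split; [apply nzprincipal_lpow; auto |].
    rewrite val_lpow; auto; fold d; rewrite S_INR in *; lra.
Qed.

Lemma val_unbounded (r : R) : exists c, nzprincipal c /\ r < val c.
Proof.
  pose proof (val_pos e He Hem); destruct (INR_unbounded (r / val e)) as [N HN].
  exists (lpow e N); split; [apply nzprincipal_lpow; auto |].
  rewrite val_lpow; auto; assert (r / val e * val e = r) by (field; lra); nra.
Qed.

Definition val_gt_join (s : R) := sup (fun x => nzprincipal x /\ s < val x).

Lemma val_ge_of_mul_le (s : R) c q b1 b2 : 0 <= s -> nzprincipal c -> nzprincipal q ->
  val_gt_join s <== b1 -> q <== b2 -> b1 ** b2 <== lc c -> val c - s <= val q.
Proof.
  intros Hs Hc Hq H1 H2 H12; apply Rle_plus_epsilon; intros eps Heps.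
  destruct (val_dense s (s + eps)) as [x [Hx Hvx]]; [auto | lra |].
  assert (Hxq : lc (x ** q) <== lc c).
  { apply loc_le_loc; eapply le_trans; [| apply H12]; apply mul_mono; auto.
    eapply le_trans; [| apply H1]; apply sup_ub; split; [auto | lra]. }
  apply (loc_le_iff_val_ge _ _ (nzprincipal_mul _ _ Hx Hq) Hc) in Hxq.
  rewrite val_mul in Hxq; auto; lra.
Qed.

(* Split [lc c = b1 ** b2] sharply with [val_gt_join r <= b1] and
   [val_gt_join (val c - r) <= b2]; the principal [p1] found below [b1] has value [r]. *)
Lemma val_surj (r : R) : 0 <= r -> exists p, nzprincipal p /\ val p = r.
Proof.
  intros Hr; destruct (val_unbounded r) as [c [Hc Hvc]].
  assert (HAB : val_gt_join r ** val_gt_join (val c - r) <== lc c).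
  { apply mul_sup_least; intros y [Hy Hvy]; rewrite mulC; apply mul_sup_least.
    intros x [Hx Hvx]; eapply le_trans; [apply le_loc |].
    apply (loc_le_iff_val_ge _ _ (nzprincipal_mul _ _ Hy Hx) Hc); rewrite val_mul; auto; lra. }
  destruct (Hsh _ _ _ HAB) as [b1 [b2 [H1 [H2 Ec]]]].
  destruct (nzprincipal_le_loc_mul c b1 b2 Hc) as [p1 [p2 [Hp1 [Hp2 [Hpb1 [Hpb2 Hc12]]]]]];
    [rewrite <- Ec, loc_idem; apply le_loc |].
  assert (Ev : val p1 + val p2 = val c).
  { rewrite <- val_mul; auto; apply val_congr; auto using nzprincipal_mul.
    apply le_antisym; auto; apply loc_le_loc; rewrite Ec; apply mul_mono; auto. }
  assert (Hc12' : b1 ** b2 <== lc c) by (rewrite Ec; apply le_refl).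
  pose proof (val_ge_of_mul_le r c p2 b1 b2 Hr Hc Hp2 H1 Hpb2 Hc12').
  pose proof (val_ge_of_mul_le (val c - r) c p1 b2 b1) as Hv1.
  rewrite mulC in Hv1; exists p1; split; [auto |].
  enough (val c - (val c - r) <= val p1) by lra.
  apply Hv1; auto; lra.
Qed.

Lemma to_R1_surj A : R1_in A -> exists x, to_R1 (lc x) = A.
Proof.
  intros [[r [Hr ->]] | [[r [Hr ->]] | ->]].
  - exists (val_gt_join r); apply to_R1_eq; simpl; auto.
    intros q; split.
    + intros [a [Ha [Har Hvq]]].
      destruct (nzprincipal_le_loc_member a _ Ha (fun t Ht => proj1 (proj1 Ht)) Har)
        as [b [[Hb Hvb] [_ Hab]]].
      apply (loc_le_iff_val_ge _ _ Ha Hb) in Hab; lra.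
    + intros Hq; destruct (val_dense r q) as [b [Hb Hvb]]; auto.
      exists b; split; [auto | split; [| lra]].
      eapply le_trans; [| apply le_loc]; apply sup_ub; split; [auto | lra].
  - destruct (val_surj r Hr) as [p [Hp Ep]]; exists p; apply to_R1_eq; simpl; auto.
    intros q; split.
    + intros [a [Ha [Hap Hvq]]]; apply loc_le_loc in Hap.
      apply (loc_le_iff_val_ge _ _ Ha Hp) in Hap; lra.
    + intros Hq; exists p; split; [| split]; auto; [apply le_loc | lra].
  - exists bot; rewrite loc_zero; apply to_R1_eq; auto; [discriminate |].
    intros q; split; [| discriminate]; intros [a [Ha [Ha0 _]]].
    exfalso; apply (proj2 Ha), le_zero_eq; auto.
Qed.

Lemma loc_iso_R1 : loc_iso L m R1_in R1_le R1_mul.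
Proof.
  exists to_R1; split; [| split; [| split]];
    [intros; apply to_R1_in | exact to_R1_surj | exact to_R1_le_iff | exact to_R1_mul].
Qed.
End WithoutUniformizer.
End Valuation.

(** * With a uniformizer, L_m is Z_- *)

Section Uniformizer.
Variable pi : L.
Hypothesis Hpi : nzprincipal pi.
Hypothesis Hpim : pi <== m.
Hypothesis Hunif : forall t, nzprincipal t -> t <== m -> lc t <== lc pi.

Lemma loc_eq_lpow_uniformizer a : nzprincipal a -> exists k, lc a = lc (lpow pi k).
Proof.
  intros Ha; destruct (loc_archimedean pi a (proj1 Hpi) Hpim Ha) as [N HN].
  destruct (nat_last_true (fun k => lc a <== lc (lpow pi k)) N) as [k [Hk1 Hk2]]; auto.
  { simpl; rewrite loc_one; apply le_one. }
  destruct (loc_le_divides a (lpow pi k) Ha (nzprincipal_lpow _ _ Hpi) Hk1) as [r [Hr Er]].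
  destruct (classic (r <== m)) as [Hrm | Hrm].
  - exfalso; apply Hk2; rewrite <- Er; simpl lpow; apply loc_mul_mono; auto using le_refl.
  - exists k; rewrite <- Er, mulC; apply loc_mul_unit_at, unit_at_principal; [apply Hr | auto].
Qed.

Lemma loc_lpow_uniformizer_le_iff j k : lc (lpow pi j) <== lc (lpow pi k) <-> (k <= j)%nat.
Proof.
  split; [apply loc_lpow_le_lpow; auto |].
  intros; apply loc_mono, lpow_antimono; auto.
Qed.

Lemma lpow_uniformizer_neq_le_zero k : ~ lpow pi k <== bot.
Proof. intros H; apply (proj2 (nzprincipal_lpow _ k Hpi)), le_zero_eq; auto. Qed.

Lemma loc_le_of_lpow_uniformizer x y :
  (forall k, lpow pi k <== lc x -> lpow pi k <== lc y) -> lc x <== lc y.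
Proof.
  intros H; apply le_of_nzprincipal_le; intros b Hb Hbx.
  destruct (loc_eq_lpow_uniformizer b Hb) as [k Ek].
  eapply le_trans; [apply le_loc |]; rewrite Ek; apply loc_le_loc, H.
  eapply le_trans; [apply le_loc |]; rewrite <- Ek; apply loc_le_loc; auto.
Qed.

Lemma loc_eq_zero_of_no_lpow x : ~ (exists k, lpow pi k <== lc x) -> lc x = bot.
Proof.
  intros H; apply le_zero_eq; rewrite <- loc_zero; apply loc_le_of_lpow_uniformizer.
  intros k Hk; exfalso; eauto.
Qed.

Lemma lpow_uniformizer_le_loc_mul k x y : lpow pi k <== lc (lc x ** lc y) ->
  exists i j, lpow pi i <== lc x /\ lpow pi j <== lc y /\ (i + j <= k)%nat.
Proof.
  intros Hk; destruct (nzprincipal_le_loc_mul _ _ _ (nzprincipal_lpow _ k Hpi) Hk)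
    as [p1 [p2 [Hp1 [Hp2 [Hpx [Hpy H12]]]]]].
  destruct (loc_eq_lpow_uniformizer p1 Hp1) as [i Ei], (loc_eq_lpow_uniformizer p2 Hp2) as [j Ej].
  exists i, j; split; [| split].
  - eapply le_trans; [apply le_loc |]; rewrite <- Ei; apply loc_le_loc; auto.
  - eapply le_trans; [apply le_loc |]; rewrite <- Ej; apply loc_le_loc; auto.
  - rewrite (loc_mul_congr _ _ _ _ Ei Ej), <- lpow_add in H12.
    apply loc_lpow_uniformizer_le_iff in H12; auto.
Qed.

Definition uniformizer_order z : nat :=
  epsilon (inhabits 0%nat)
    (fun k => lpow pi k <== z /\ forall j, lpow pi j <== z -> (k <= j)%nat).

Lemma uniformizer_order_spec z : (exists k, lpow pi k <== z) ->
  lpow pi (uniformizer_order z) <== z /\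
  forall j, lpow pi j <== z -> (uniformizer_order z <= j)%nat.
Proof. intros H; unfold uniformizer_order; apply epsilon_spec, nat_least; auto. Qed.

Definition to_Zm z : option Z :=
  if excluded_middle_informative (exists k, lpow pi k <== z)
  then Some (- Z.of_nat (uniformizer_order z))%Z else None.

Lemma to_Zm_zero : to_Zm bot = None.
Proof.
  unfold to_Zm; destruct excluded_middle_informative as [[k Hk] |]; auto.
  exfalso; eapply lpow_uniformizer_neq_le_zero; eauto.
Qed.

Lemma to_Zm_in x : Zm_in (to_Zm (lc x)).
Proof. unfold to_Zm; destruct excluded_middle_informative; simpl; auto; lia. Qed.

Lemma to_Zm_le_iff x y : Zm_le (to_Zm (lc x)) (to_Zm (lc y)) <-> lc x <== lc y.
Proof.
  unfold to_Zm; destruct (excluded_middle_informative (exists k, lpow pi k <== lc x)) as [Hx | Hx];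
    destruct (excluded_middle_informative (exists k, lpow pi k <== lc y)) as [Hy | Hy]; simpl.
  - destruct (uniformizer_order_spec _ Hx) as [Hx1 Hx2], (uniformizer_order_spec _ Hy) as [Hy1 Hy2].
    split.
    + intros H; apply loc_le_of_lpow_uniformizer; intros k Hk.
      eapply le_trans; [apply lpow_antimono | apply Hy1]; specialize (Hx2 k Hk); lia.
    + intros H; specialize (Hy2 _ (le_trans Hx1 H)); lia.
  - split; [tauto |]; intros H; apply Hy; destruct Hx as [k Hk]; exists k; eapply le_trans; eauto.
  - split; auto; intros _; rewrite (loc_eq_zero_of_no_lpow x Hx); apply zero_le.
  - split; auto; intros _; rewrite (loc_eq_zero_of_no_lpow x Hx); apply zero_le.
Qed.

Lemma to_Zm_mul x y : to_Zm (lc (lc x ** lc y)) = Zm_mul (to_Zm (lc x)) (to_Zm (lc y)).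
Proof.
  unfold to_Zm at 2 3.
  destruct (excluded_middle_informative (exists k, lpow pi k <== lc x)) as [Hx | Hx].
  2:{ rewrite (loc_eq_zero_of_no_lpow x Hx), mul_zero_l, loc_zero, to_Zm_zero; auto. }
  destruct (excluded_middle_informative (exists k, lpow pi k <== lc y)) as [Hy | Hy].
  2:{ rewrite (loc_eq_zero_of_no_lpow y Hy), mul_zero_r, loc_zero, to_Zm_zero; auto. }
  destruct (uniformizer_order_spec _ Hx) as [Hx1 Hx2], (uniformizer_order_spec _ Hy) as [Hy1 Hy2].
  assert (Hij : lpow pi (uniformizer_order (lc x) + uniformizer_order (lc y)) <== lc (lc x ** lc y))
    by (rewrite lpow_add; eapply le_trans; [| apply le_loc]; apply mul_mono; auto).
  unfold to_Zm; destruct excluded_middle_informative as [Hxy | Hxy]; [| exfalso; eauto].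
  destruct (uniformizer_order_spec _ Hxy) as [H1 H2]; specialize (H2 _ Hij).
  destruct (lpow_uniformizer_le_loc_mul _ x y H1) as [i [j [Hi [Hj Hij']]]].
  specialize (Hx2 i Hi); specialize (Hy2 j Hj); simpl; f_equal; lia.
Qed.

Lemma to_Zm_surj (q : option Z) : Zm_in q -> exists x, to_Zm (lc x) = q.
Proof.
  destruct q as [z |]; simpl; intros Hz.
  - set (n := Z.to_nat (- z)); exists (lpow pi n).
    assert (HD : forall k, lpow pi k <== lc (lpow pi n) <-> (n <= k)%nat).
    { intros k; split.
      - intros H; apply loc_le_loc in H; apply loc_lpow_uniformizer_le_iff; auto.
      - intros H; eapply le_trans; [apply lpow_antimono; eauto | apply le_loc]. }
    unfold to_Zm; destruct excluded_middle_informative as [Hx | Hx].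
    + destruct (uniformizer_order_spec _ Hx) as [H1 H2]; apply HD in H1.
      specialize (H2 n (proj2 (HD n) (le_n n))); f_equal; unfold n in *; lia.
    + exfalso; apply Hx; exists n; apply HD; auto.
  - exists bot; rewrite loc_zero; apply to_Zm_zero.
Qed.

Lemma loc_iso_Zm : loc_iso L m Zm_in Zm_le Zm_mul.
Proof.
  exists to_Zm; split; [| split; [| split]];
    [exact to_Zm_in | exact to_Zm_surj | exact to_Zm_le_iff | exact to_Zm_mul].
Qed.
End Uniformizer.
End Localization.

(** * Localizations at maximal elements and dimension one *)

Lemma exists_nzprincipal_le x : x <> bot -> exists a, nzprincipal a /\ a <== x.
Proof.
  intros Hx; apply NNPP; intros Hno; apply Hx, le_zero_eq, le_of_nzprincipal_le.
  intros b Hb Hbx; exfalso; eauto.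
Qed.
Lemma exists_principal_le_not_le x p : ~ x <== p -> exists a, principal a /\ a <== x /\ ~ a <== p.
Proof.
  intros Hx; destruct (HPG x) as [S [HS Ex]]; apply NNPP; intros Hno; apply Hx.
  rewrite Ex; apply sup_least; intros a Ha; apply NNPP; intros Hap; apply Hno.
  exists a; split; [| split]; auto; rewrite Ex; apply sup_ub; auto.
Qed.

Lemma loc_le_of_prime m p : prime p -> p <== m -> loc m p <== p.
Proof.
  intros Hp Hpm; apply sup_least; intros a [Ha [s [Hs1 [Hs2 Has]]]].
  destruct (proj2 Hp a s Has); auto; exfalso; apply Hs2; eapply le_trans; eauto.
Qed.
Lemma prime_lpow_le p y n : prime p -> lpow y n <== p -> y <== p.
Proof.
  intros Hp; induction n; simpl; intros H; [exfalso; apply (proj1 Hp), one_le_eq; auto |].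
  destruct (proj2 Hp y (lpow y n) H); auto.
Qed.

Lemma maximal_neq_zero m : ~ (forall x, x = bot \/ x = one) -> maximal m -> m <> bot.
Proof.
  intros Hnt [_ Hmax] E; apply Hnt; intros x.
  destruct (classic (x = one)) as [| Hx1]; [right | left]; auto.
  rewrite <- E; apply Hmax; auto; rewrite E; apply zero_le.
Qed.

Lemma loc_iso_Zm_or_R1 m : ~ (forall x, x = bot \/ x = one) -> maximal m ->
  loc_iso L m Zm_in Zm_le Zm_mul \/ loc_iso L m R1_in R1_le R1_mul.
Proof.
  intros Hnt Hmax; pose proof (maximal_prime m Hmax) as Hm.
  destruct (exists_nzprincipal_le m (maximal_neq_zero m Hnt Hmax)) as [e [He Hem]].
  destruct (classic (exists pi, nzprincipal pi /\ pi <== m /\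
    forall t, nzprincipal t -> t <== m -> loc m t <== loc m pi)) as [[pi [Hpi [Hpim Hunif]]] | Hno].
  - left; apply (loc_iso_Zm m Hm pi); auto.
  - right; apply (loc_iso_R1 m Hm e); auto.
    intros t Ht Htm; apply NNPP; intros Hno'; apply Hno; exists t; split; [| split]; auto.
    intros t' Ht' Ht'm; apply NNPP; intros X; apply Hno'; eauto.
Qed.

(* If [p < x <= m] with [m] maximal, take a principal [y <= x] outside [p] and a
   nonzero principal [x0 <= p]: locally at [m] some [y^n] lies below [x0], hence
   below [p], and then [y <= p]. *)
Lemma prime_neq_zero_maximal p : prime p -> p <> bot -> maximal p.
Proof.
  intros Hp Hp0; split; [apply Hp |]; intros x Hpx Hx1; apply NNPP; intros Hxp.
  assert (Hxp' : ~ x <== p) by (intros H; apply Hxp, le_antisym; auto).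
  destruct (exists_maximal_ge x Hx1) as [m [Hmax Hxm]].
  pose proof (maximal_prime m Hmax) as Hm.
  destruct (exists_principal_le_not_le x p Hxp') as [y [Hy [Hyx Hyp]]].
  destruct (exists_nzprincipal_le p Hp0) as [x0 [Hx0 Hx0p]].
  assert (Hym : y <== m) by (eapply le_trans; eauto).
  assert (Hy0 : y <> bot) by (intros E; apply Hyp; rewrite E; apply zero_le).
  destruct (loc_archimedean m Hm y x0 Hy Hym Hx0) as [n Hn].
  destruct (loc_le_total m Hm x0 (lpow y n) Hx0) as [| H];
    [apply nzprincipal_lpow; split; auto | contradiction |].
  apply Hyp, (prime_lpow_le p y n Hp).
  eapply le_trans; [apply (le_loc m Hm) |]; eapply le_trans; [apply H |].
  eapply le_trans; [apply (loc_mono m _ _ Hx0p) |]; apply loc_le_of_prime; auto.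
  eapply le_trans; eauto.
Qed.
End MultiplicativeLattice.

Theorem theorem3p9 (L : mlattice) :
  ~ (forall x : L, x = zero L \/ x = one) ->
  C_lattice L ->
  sharp L ->
  domain L ->
  (forall x : L, exists S : L -> Prop,
      (forall a, S a -> principal L a) /\ x = sup S) ->
  (forall m : L, maximal L m ->
      loc_iso L m Zm_in Zm_le Zm_mul \/ loc_iso L m R1_in R1_le R1_mul) /\
  (forall c : L, lcompact L c -> principal L c) /\
  (forall p : L, prime L p -> p <> zero L -> maximal L p).
Proof.
  intros Hnt HC Hsh Hdom HPG; change (principally_generated L) in HPG.
  split; [| split].
  - intros m Hmax; apply loc_iso_Zm_or_R1; auto.
  - apply compact_principal; auto.
  - apply prime_neq_zero_maximal; auto.
Qed.
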